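(* For every integer $n\ge 2$ and every tangential quadrilateral $Q$, there exists an $n\times n$ grid dissection of $Q$ into $n^2$ smaller quadrilaterals, each of which is tangential.
   Context: A convex quadrilateral is tangential if it has an inscribed circle tangent to all four sides; equivalently (Pitot–Steiner), the sums of the lengths of the two pairs of opposite sides are equal. Let $ABCD$ be a convex quadrilateral and $m,n$ positive integers. An $m\times n$ grid dissection of $ABCD$ is given by two families of segments $\mathcal S=\{s_1,\dots,s_{m-1}\}$ and $\mathcal T=\{t_1,\dots,t_{n-1}\}$ such that: each $s\in\mathcal S$ has one endpoint on side $AB$ and the other on side $CD$; each $t\in\mathcal T$ has one endpoint on side $AD$ and the other on side $BC$; the segments of $\mathcal S$ are pairwise disjoint, and the segments of $\mathcal T$ are pairwise disjoint. These segments cut $ABCD$ into $mn$ quadrilaterals. *)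

From Stdlib Require Import Reals Lra Lia.
Open Scope R_scope.

Definition pt := (R * R)%type.

(* Twice the signed area of triangle (o, a, b): > 0 iff o, a, b turn counterclockwise. *)
Definition cross (o a b : pt) : R :=
  (fst a - fst o) * (snd b - snd o) - (snd a - snd o) * (fst b - fst o).

Definition dist (p q : pt) : R :=
  sqrt ((fst p - fst q) ^ 2 + (snd p - snd q) ^ 2).

Definition lerp (X Y : pt) (t : R) : pt :=
  (fst X + t * (fst Y - fst X), snd X + t * (snd Y - snd X)).

Definition on_seg (P X Y : pt) : Prop :=
  exists t, 0 <= t <= 1 /\ P = lerp X Y t.

(* ABCD (vertices in cyclic order) is a convex quadrilateral: all four turns
   strictly in the same direction (for 4 vertices this forces a simple convex polygon). *)
Definition convex_quad (A B C D : pt) : Prop :=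
  (0 < cross A B C /\ 0 < cross B C D /\ 0 < cross C D A /\ 0 < cross D A B) \/
  (cross A B C < 0 /\ cross B C D < 0 /\ cross C D A < 0 /\ cross D A B < 0).

Definition in_quad (A B C D P : pt) : Prop :=
  (0 <= cross A B P /\ 0 <= cross B C P /\ 0 <= cross C D P /\ 0 <= cross D A P) \/
  (cross A B P <= 0 /\ cross B C P <= 0 /\ cross C D P <= 0 /\ cross D A P <= 0).

Definition touches_side (O : pt) (r : R) (X Y : pt) : Prop :=
  exists T, on_seg T X Y /\ dist O T = r.

(* Circle (O, r) is inscribed in ABCD: it lies in the quadrilateral
   (its closed disk is contained in ABCD) and touches all four sides;
   a circle inside a convex region touching a side is tangent to it. *)
Definition inscribed_circle (A B C D O : pt) (r : R) : Prop :=
  0 < r /\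
  (forall P, dist O P <= r -> in_quad A B C D P) /\
  touches_side O r A B /\ touches_side O r B C /\
  touches_side O r C D /\ touches_side O r D A.

Definition tangential (A B C D : pt) : Prop :=
  convex_quad A B C D /\ exists O r, inscribed_circle A B C D O r.

(* An m x n grid dissection of ABCD.
   s_i (0 <= i <= m) is the segment from lerp A B (a i) on AB to lerp D C (a' i) on DC;
   s_0 = AD, s_m = BC, and s_1..s_{m-1} are the family S.
   t_j (0 <= j <= n) is the segment from lerp A D (b j) on AD to lerp B C (b' j) on BC;
   t_0 = AB, t_n = DC, and t_1..t_{n-1} are the family T.
   Strictly increasing parameters = the segments of each family are pairwise
   disjoint (and distinct from the sides).  X i j is the crossing point of s_i and t_j;
   the cells are the quadrilaterals X i j, X (i+1) j, X (i+1) (j+1), X i (j+1). *)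
Definition grid_dissection (m n : nat) (A B C D : pt)
    (a a' b b' : nat -> R) (X : nat -> nat -> pt) : Prop :=
  a 0%nat = 0 /\ a m = 1 /\ a' 0%nat = 0 /\ a' m = 1 /\
  (forall i, (i < m)%nat -> a i < a (S i) /\ a' i < a' (S i)) /\
  b 0%nat = 0 /\ b n = 1 /\ b' 0%nat = 0 /\ b' n = 1 /\
  (forall j, (j < n)%nat -> b j < b (S j) /\ b' j < b' (S j)) /\
  (forall i j, (i <= m)%nat -> (j <= n)%nat ->
     on_seg (X i j) (lerp A B (a i)) (lerp D C (a' i)) /\
     on_seg (X i j) (lerp A D (b j)) (lerp B C (b' j))).

From Stdlib Require Import Reals Lra Lia Psatz.
Open Scope R_scope.

(* Let E = AB n CD and F = AD n BC.  After a similarity sending F, E to (-1, 0), (1, 0),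
   the side lines belong to the pencils through F and E, parametrised by the tangents t
   and u of the half-angles they make with FE.  A cell bounded by the F-lines t1, t2 and
   the E-lines u1, u2 is tangential iff t2 u1 = t1 u2 or t2 u2 = t1 u1 (cell_ratio;
   Lnet_cell_tangential and its converse Lnet_cell_ratio).  Since ABCD itself is such a
   cell, cutting it along F-lines and E-lines whose parameters form geometric progressions
   yields tangential cells.  When AB || CD the pencil at E degenerates into parallel lines
   (the H-net, with heights in place of u); when moreover AD || BC, ABCD is a rhombus, cut
   into n^2 homothetic rhombi; the case AD || BC alone reduces to AB || CD by exchanging
   the two families of segments. *)

Definition vec (p q : pt) : pt := (fst p - fst q, snd p - snd q).
Definition wedge (v w : pt) : R := fst v * snd w - snd v * fst w.
Definition norm2 (v : pt) : R := fst v * fst v + snd v * snd v.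
Definition norm (v : pt) : R := sqrt (norm2 v).

Lemma norm2_ge0 v : 0 <= norm2 v.
Proof. unfold norm2; nra. Qed.

Lemma norm2_pos v : v <> (0, 0) -> 0 < norm2 v.
Proof.
  intros Hv; destruct v as [x y]; unfold norm2; simpl.
  destruct (Req_dec x 0), (Req_dec y 0); subst; try congruence; nra.
Qed.

Lemma norm_sqr v : norm v * norm v = norm2 v.
Proof. apply sqrt_sqrt, norm2_ge0. Qed.

Lemma dist_norm p q : dist p q = norm (vec q p).
Proof. unfold dist, norm, norm2, vec; simpl; f_equal; ring. Qed.

Lemma dist_sym p q : dist p q = dist q p.
Proof. unfold dist; f_equal; ring. Qed.

Lemma dist_ge0 p q : 0 <= dist p q.
Proof. apply sqrt_pos. Qed.

Lemma dist_pos p q : p <> q -> 0 < dist p q.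
Proof.
  intros H; rewrite dist_norm; apply sqrt_lt_R0, norm2_pos.
  intros E; apply H; destruct p, q; unfold vec in E; simpl in E.
  injection E; intros; f_equal; lra.
Qed.

Lemma wedge_bound v w : Rabs (wedge v w) <= norm v * norm w.
Proof.
  unfold norm; rewrite <- sqrt_mult by apply norm2_ge0.
  rewrite <- sqrt_Rsqr_abs; apply sqrt_le_1_alt.
  destruct v as [a b], w as [c d]; unfold Rsqr, wedge, norm2; simpl.
  pose proof (Rle_0_sqr (a * c + b * d)); unfold Rsqr in *; nra.
Qed.

Lemma Rabs_le_between a b : Rabs a <= b -> - b <= a <= b.
Proof. intros H; pose proof (Rle_abs a); pose proof (Rle_abs (- a)); rewrite Rabs_Ropp in *; lra. Qed.

Lemma cross_swap o a b : cross o a b = - cross b a o.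
Proof. unfold cross; ring. Qed.

Lemma cross_flip o a b : cross o a b = - cross a o b.
Proof. unfold cross; ring. Qed.

Lemma cross_degenerate a b : cross a a b = 0.
Proof. unfold cross; ring. Qed.

Definition sign_unit (s : R) : Prop := s = 1 \/ s = -1.

Lemma sign_unit_sq s : sign_unit s -> s * s = 1.
Proof. intros [-> | ->]; ring. Qed.

Lemma sign_unit_opp s : sign_unit s -> sign_unit (- s).
Proof. intros [-> | ->]; [right | left]; ring. Qed.

Lemma sign_unit_mul s s' : sign_unit s -> sign_unit s' -> sign_unit (s * s').
Proof. intros [-> | ->] [-> | ->]; unfold sign_unit; lra. Qed.

(* The turn X Y Z has orientation s, and O lies at distance r from the line XY,
   on the same side as Z. *)
Definition inner_side (s : R) (O : pt) (r : R) (X Y Z : pt) : Prop :=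
  0 < s * cross X Y Z /\ cross X Y O = s * r * dist X Y.

(* Algebraic certificate of tangency: the four turns have a common orientation s and
   a point O is at the same distance r from the four side lines, on their inner sides. *)
Definition tangential_cert (P1 P2 P3 P4 : pt) : Prop :=
  exists s O r, sign_unit s /\ 0 < r /\
    inner_side s O r P1 P2 P3 /\ inner_side s O r P2 P3 P4 /\
    inner_side s O r P3 P4 P1 /\ inner_side s O r P4 P1 P2.

Lemma disk_in_halfplane s r X Y O P : sign_unit s -> 0 < r ->
  cross X Y O = s * r * dist X Y -> dist O P <= r -> 0 <= s * cross X Y P.
Proof.
  intros Hs Hr H Hd.
  assert (E : cross X Y P = cross X Y O + wedge (vec Y X) (vec P O))
    by (unfold cross, wedge, vec; simpl; ring).
  rewrite E, H.
  pose proof (wedge_bound (vec Y X) (vec P O)) as Hb.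
  rewrite <- !dist_norm in Hb.
  pose proof (dist_ge0 X Y).
  assert (dist X Y * dist O P <= dist X Y * r) by (apply Rmult_le_compat_l; lra).
  apply Rabs_le_between in Hb.
  destruct Hs; subst s; nra.
Qed.

(* If the disk lies between the neighbouring sides WX and YZ and O is at distance r
   from the line XY, then the circle touches the segment [X, Y]: the foot of the
   perpendicular from O lies on the segment. *)
Lemma touches_side_of_distance s r W X Y Z O : sign_unit s -> 0 < r ->
  0 < s * cross W X Y -> 0 < s * cross X Y Z ->
  (forall P, dist O P <= r -> 0 <= s * cross W X P /\ 0 <= s * cross Y Z P) ->
  cross X Y O = s * r * dist X Y -> touches_side O r X Y.
Proof.
  intros Hs Hr H1 H2 Hin H.
  set (v := vec Y X). set (w := vec O X).
  assert (Hxy : X <> Y).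
  { intros ->. rewrite cross_degenerate in H2. lra. }
  assert (Hd : dist X Y * dist X Y = norm2 v).
  { rewrite dist_norm, norm_sqr. reflexivity. }
  pose proof (dist_pos _ _ Hxy) as HL.
  assert (Hv : 0 < norm2 v) by nra.
  set (tau := (fst v * fst w + snd v * snd w) / norm2 v).
  set (T := lerp X Y tau).
  assert (HOT : dist O T = r).
  { assert (E : norm2 (vec T O) = wedge v w * wedge v w / norm2 v).
    { unfold T, lerp, tau, norm2, vec, wedge; unfold v, w, vec, norm2 in Hv; simpl in *.
      field; lra. }
    rewrite dist_norm; unfold norm; rewrite E.
    change (wedge v w) with (cross X Y O); rewrite H, <- Hd.
    replace (s * r * dist X Y * (s * r * dist X Y) / (dist X Y * dist X Y))
      with (s * s * (r * r)) by (field; lra).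
    rewrite (sign_unit_sq s Hs), Rmult_1_l.
    apply sqrt_square; lra. }
  exists T; split; [|exact HOT].
  exists tau; split; [|reflexivity].
  destruct (Hin T) as [Ha Hb]; [lra|].
  assert (E1 : cross W X T = tau * cross W X Y) by (unfold T, lerp, cross; simpl; ring).
  assert (E2 : cross Y Z T = (1 - tau) * cross X Y Z) by (unfold T, lerp, cross; simpl; ring).
  rewrite E1 in Ha; rewrite E2 in Hb.
  destruct Hs; subst s; split; nra.
Qed.

Lemma tangential_cert_tangential P1 P2 P3 P4 :
  tangential_cert P1 P2 P3 P4 -> tangential P1 P2 P3 P4.
Proof.
  intros (s & O & r & Hs & Hr & [H1 E1] & [H2 E2] & [H3 E3] & [H4 E4]).
  assert (Hin : forall P, dist O P <= r ->
    0 <= s * cross P1 P2 P /\ 0 <= s * cross P2 P3 P /\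
    0 <= s * cross P3 P4 P /\ 0 <= s * cross P4 P1 P).
  { intros P HP; repeat split; eapply (disk_in_halfplane s r); eauto. }
  split.
  - destruct Hs; subst s; [left | right]; repeat split; lra.
  - exists O, r; split; [exact Hr|]; split.
    + intros P HP; destruct (Hin P HP) as (? & ? & ? & ?).
      destruct Hs; subst s; [left | right]; repeat split; lra.
    + repeat split; eapply (touches_side_of_distance s r); eauto;
        intros P HP; destruct (Hin P HP) as (? & ? & ? & ?); auto.
Qed.

Lemma distance_of_touches_side s r X Y O : sign_unit s -> 0 < r -> X <> Y ->
  (forall P, dist O P <= r -> 0 <= s * cross X Y P) ->
  touches_side O r X Y -> cross X Y O = s * r * dist X Y.
Proof.
  intros Hs Hr Hxy Hin (T & (tau & Ht & ET) & HT).
  pose proof (dist_pos _ _ Hxy) as HL.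
  set (v := vec Y X). set (L := dist X Y).
  assert (HvL : L * L = norm2 v) by (unfold L, v; rewrite dist_norm, norm_sqr; reflexivity).
  (* the point of the disk in the direction of the outer normal of XY *)
  set (P := (fst O + s * r / L * snd v, snd O - s * r / L * fst v)).
  assert (HP : dist O P = r).
  { rewrite dist_norm; unfold norm.
    replace (norm2 (vec P O)) with (s * r / L * (s * r / L) * norm2 v)
      by (unfold P, norm2, vec; simpl; ring).
    replace (s * r / L * (s * r / L) * norm2 v) with (s * s * (r * r))
      by (rewrite <- HvL; field; unfold L; lra).
    rewrite (sign_unit_sq s Hs), Rmult_1_l.
    apply sqrt_square; lra. }
  pose proof (Hin P (Req_le _ _ HP)) as Hlow.
  replace (cross X Y P) with (cross X Y O - s * r / L * norm2 v) in Hlow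
    by (unfold P, cross, v, vec, norm2; simpl; ring).
  replace (s * r / L * norm2 v) with (s * r * L) in Hlow
    by (rewrite <- HvL; field; unfold L; lra).
  assert (EO : cross X Y O = wedge v (vec O T))
    by (rewrite ET; unfold v, cross, wedge, vec, lerp; simpl; ring).
  pose proof (wedge_bound v (vec O T)) as Hb.
  replace (norm v) with L in Hb by (unfold L, v; apply dist_norm).
  rewrite <- dist_norm, (dist_sym T O), HT, <- EO in Hb.
  apply Rabs_le_between in Hb.
  fold L; destruct Hs; subst s; nra.
Qed.

(* Conversely, an inscribed circle yields a certificate, s being the orientation of the
   convex quadrilateral. *)
Lemma tangential_tangential_cert A B C D :
  tangential A B C D -> tangential_cert A B C D.
Proof.
  intros [Hc (O & r & Hr & Hdisk & T1 & T2 & T3 & T4)].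
  assert (Hs : exists s, sign_unit s /\ 0 < s * cross A B C /\ 0 < s * cross B C D /\
     0 < s * cross C D A /\ 0 < s * cross D A B).
  { destruct Hc as [H | H]; [exists 1 | exists (-1)]; unfold sign_unit; lra. }
  destruct Hs as (s & Hs & h1 & h2 & h3 & h4).
  assert (Hin : forall P, dist O P <= r ->
     0 <= s * cross A B P /\ 0 <= s * cross B C P /\
     0 <= s * cross C D P /\ 0 <= s * cross D A P).
  { intros P HP.
    assert (Sum : cross A B P + cross B C P + cross C D P + cross D A P
                  = cross A B C + cross C D A) by (unfold cross; ring).
    destruct (Hdisk P HP) as [H | H]; destruct Hs; subst s; repeat split; nra. }
  assert (Hne : forall X Y Z, 0 < s * cross X Y Z -> X <> Y).
  { intros X Y Z H ->; rewrite cross_degenerate in H; lra. }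
  exists s, O, r; repeat split; auto;
    apply distance_of_touches_side; eauto; intros P HP; apply Hin; auto.
Qed.

(* Traversing the quadrilateral backwards flips the orientation. *)
Lemma tangential_cert_rev P1 P2 P3 P4 :
  tangential_cert P1 P2 P3 P4 -> tangential_cert P1 P4 P3 P2.
Proof.
  intros (s & O & r & Hs & Hr & [H1 E1] & [H2 E2] & [H3 E3] & [H4 E4]).
  exists (- s), O, r; split; [apply sign_unit_opp; auto|]; split; [exact Hr|].
  unfold inner_side; repeat split;
    first [ rewrite cross_swap; lra | rewrite cross_flip, dist_sym; lra ].
Qed.

(* The similarity p |-> M + e p (complex product), preceded by the reflection
   (x, y) |-> (x, -y) when sg = -1.  It multiplies lengths by |e|. *)
Definition sim (M e : pt) (sg : R) (p : pt) : pt :=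
  (fst M + fst p * fst e - sg * snd p * snd e,
   snd M + fst p * snd e + sg * snd p * fst e).

Lemma cross_sim M e sg p q r :
  cross (sim M e sg p) (sim M e sg q) (sim M e sg r) = sg * norm2 e * cross p q r.
Proof. unfold cross, sim, norm2; simpl; ring. Qed.

Lemma dist_sim M e sg p q : sign_unit sg ->
  dist (sim M e sg p) (sim M e sg q) = norm e * dist p q.
Proof.
  intros Hs; rewrite !dist_norm; unfold norm; rewrite <- sqrt_mult by apply norm2_ge0.
  f_equal; unfold norm2, vec, sim; simpl; destruct Hs; subst; ring.
Qed.

Lemma lerp_sim M e sg p q t : sim M e sg (lerp p q t) = lerp (sim M e sg p) (sim M e sg q) t.
Proof. unfold sim, lerp; simpl; f_equal; ring. Qed.

Lemma on_seg_sim M e sg P X Y : on_seg P X Y -> on_seg (sim M e sg P) (sim M e sg X) (sim M e sg Y).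
Proof. intros (t & Ht & ->); exists t; split; [exact Ht | apply lerp_sim]. Qed.

Lemma sim_inverse M e sg : sign_unit sg -> e <> (0, 0) ->
  exists M' e', e' <> (0, 0) /\
    (forall p, sim M' e' sg (sim M e sg p) = p) /\ (forall P, sim M e sg (sim M' e' sg P) = P).
Proof.
  intros Hs He; pose proof (norm2_pos e He) as Hq.
  set (e' := (fst e / norm2 e, - sg * snd e / norm2 e)).
  exists (- (fst M * fst e' - sg * snd M * snd e'), - (fst M * snd e' + sg * snd M * fst e')), e'.
  destruct e as [ex ey]; unfold e', sim, norm2 in *; simpl in *; split; [|split].
  - intros E; injection E as E1 E2.
    assert (ex = 0) by (apply (Rmult_eq_reg_r (/ (ex * ex + ey * ey))); [lra|];
      apply Rinv_neq_0_compat; lra).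
    assert (ey = 0) by (apply (Rmult_eq_reg_r (- sg / (ex * ex + ey * ey))); [lra|];
      destruct Hs; subst sg; unfold Rdiv; apply Rmult_integral_contrapositive;
      split; try apply Rinv_neq_0_compat; lra).
    subst; lra.
  - intros [px py]; simpl; destruct Hs; subst; f_equal; field; lra.
  - intros [px py]; simpl; destruct Hs; subst; f_equal; field; lra.
Qed.

Lemma tangential_cert_sim M e sg P1 P2 P3 P4 : sign_unit sg -> e <> (0, 0) ->
  tangential_cert P1 P2 P3 P4 ->
  tangential_cert (sim M e sg P1) (sim M e sg P2) (sim M e sg P3) (sim M e sg P4).
Proof.
  intros Hsg He (s & O & r & Hs & Hr & S1 & S2 & S3 & S4).
  pose proof (norm2_pos e He) as Hq.
  pose proof (sqrt_lt_R0 _ Hq) as Hn; fold (norm e) in Hn.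
  pose proof (sign_unit_sq sg Hsg) as Hsg2.
  assert (Side : forall X Y Z, inner_side s O r X Y Z ->
    inner_side (sg * s) (sim M e sg O) (r * norm e) (sim M e sg X) (sim M e sg Y) (sim M e sg Z)).
  { intros X Y Z [H1 H2]; unfold inner_side.
    rewrite !cross_sim, dist_sim, H2, <- norm_sqr by exact Hsg; split.
    - replace (sg * s * (sg * (norm e * norm e) * cross X Y Z))
        with ((sg * sg) * (norm e * norm e) * (s * cross X Y Z)) by ring.
      rewrite Hsg2; apply Rmult_lt_0_compat; nra.
    - ring. }
  exists (sg * s), (sim M e sg O), (r * norm e); split; [apply sign_unit_mul; auto|].
  split; [nra|].
  exact (conj (Side _ _ _ S1) (conj (Side _ _ _ S2) (conj (Side _ _ _ S3) (Side _ _ _ S4)))).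
Qed.

Lemma tangential_cert_sim_inv M e sg P1 P2 P3 P4 : sign_unit sg -> e <> (0, 0) ->
  tangential_cert (sim M e sg P1) (sim M e sg P2) (sim M e sg P3) (sim M e sg P4) ->
  tangential_cert P1 P2 P3 P4.
Proof.
  intros Hs He H.
  destruct (sim_inverse M e sg Hs He) as (M' & e' & He' & Hinv & _).
  rewrite <- (Hinv P1), <- (Hinv P2), <- (Hinv P3), <- (Hinv P4).
  apply tangential_cert_sim; auto.
Qed.

Definition tangential_grid (n : nat) (A B C D : pt) : Prop :=
  exists (a a' b b' : nat -> R) (X : nat -> nat -> pt),
    grid_dissection n n A B C D a a' b b' X /\
    (forall i j, (i < n)%nat -> (j < n)%nat ->
       tangential (X i j) (X (S i) j) (X (S i) (S j)) (X i (S j))).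

Lemma tangential_grid_sim n M e sg A B C D : sign_unit sg -> e <> (0, 0) ->
  tangential_grid n A B C D ->
  tangential_grid n (sim M e sg A) (sim M e sg B) (sim M e sg C) (sim M e sg D).
Proof.
  intros Hs He (a & a' & b & b' & X & G & T).
  destruct G as (g1 & g2 & g3 & g4 & g5 & g6 & g7 & g8 & g9 & g10 & g11).
  exists a, a', b, b', (fun i j => sim M e sg (X i j)); split.
  - repeat split; auto; try (apply g5; assumption); try (apply g10; assumption);
      rewrite <- !lerp_sim; apply on_seg_sim; apply g11; assumption.
  - intros i j Hi Hj; apply tangential_cert_tangential, tangential_cert_sim; auto.
    apply tangential_tangential_cert, T; auto.
Qed.

Lemma tangential_grid_transpose n A B C D :
  tangential_grid n A D C B -> tangential_grid n A B C D.
Proof.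
  intros (a & a' & b & b' & X & G & T).
  destruct G as (g1 & g2 & g3 & g4 & g5 & g6 & g7 & g8 & g9 & g10 & g11).
  exists b, b', a, a', (fun i j => X j i); split.
  - repeat split; auto; try (intros; apply g10; auto); try (intros; apply g5; auto);
      apply (g11 j i); auto.
  - intros i j Hi Hj; apply tangential_cert_tangential, tangential_cert_rev.
    apply tangential_tangential_cert, T; auto.
Qed.

Definition pl (P : pt) (a : R) (d : pt) : pt := (fst P + a * fst d, snd P + a * snd d).

Lemma pl_lerp P d a0 an a : an <> a0 ->
  pl P a d = lerp (pl P a0 d) (pl P an d) ((a - a0) / (an - a0)).
Proof. intros H; unfold pl, lerp; simpl; f_equal; field; lra. Qed.

Definition smono (n : nat) (f : nat -> R) : Prop :=
  (forall j, (j < n)%nat -> f j < f (S j)) \/ (forall j, (j < n)%nat -> f (S j) < f j).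

Lemma incr_lt n f : (forall j, (j < n)%nat -> f j < f (S j)) ->
  forall i j, (i < j)%nat -> (j <= n)%nat -> f i < f j.
Proof.
  intros H i j Hij; induction j as [|j IH]; [lia|]; intros Hj.
  destruct (Nat.eq_dec i j) as [-> | Hne]; [apply H; lia|].
  apply Rlt_trans with (f j); [apply IH | apply H]; lia.
Qed.

Lemma smono_lt n f : smono n f -> exists sg, sign_unit sg /\
  forall i j, (i < j)%nat -> (j <= n)%nat -> sg * f i < sg * f j.
Proof.
  intros [H | H]; [exists 1 | exists (-1)]; split; unfold sign_unit; auto;
    intros i j Hij Hj.
  - rewrite !Rmult_1_l; apply (incr_lt n f H); auto.
  - apply (incr_lt n (fun j => -1 * f j)); auto; intros k Hk; specialize (H k Hk); lra.
Qed.

Lemma smono_endpoints n f : (1 <= n)%nat -> smono n f -> f n <> f 0%nat.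
Proof.
  intros Hn Hf; destruct (smono_lt n f Hf) as (sg & Hsg & H).
  specialize (H 0%nat n ltac:(lia) ltac:(lia)); intros E; rewrite E in H; lra.
Qed.

Lemma smono_between n f j : smono n f -> (j <= n)%nat ->
  (f 0%nat <= f j <= f n) \/ (f n <= f j <= f 0%nat).
Proof.
  intros Hf Hj; destruct (smono_lt n f Hf) as (sg & Hsg & H).
  assert (H0 : sg * f 0%nat <= sg * f j)
    by (destruct (Nat.eq_dec j 0) as [-> | ]; [lra | left; apply H; lia]).
  assert (H1 : sg * f j <= sg * f n)
    by (destruct (Nat.eq_dec j n) as [-> | ]; [lra | left; apply H; lia]).
  destruct Hsg; subst sg; [left | right]; lra.
Qed.

Lemma smono_step n f j : smono n f -> (j < n)%nat -> f j <> f (S j).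
Proof. intros [H | H] Hj; specialize (H j Hj); lra. Qed.

Lemma smono_transfer n x f : smono n x ->
  (forall j, (j < n)%nat -> exists p, 0 < p /\ f (S j) - f j = (x (S j) - x j) * p) ->
  smono n f.
Proof.
  intros [H | H] Hf; [left | right]; intros j Hj; destruct (Hf j Hj) as (p & Hp & E);
    specialize (H j Hj); nra.
Qed.

Definition rescale (n : nat) (f : nat -> R) (j : nat) : R :=
  (f j - f 0%nat) / (f n - f 0%nat).

Lemma frac_unit x D : 0 < D -> 0 <= x <= D -> 0 <= x / D <= 1.
Proof.
  intros HD Hx; split.
  - apply Rmult_le_pos; [lra | left; apply Rinv_0_lt_compat; auto].
  - apply (Rmult_le_reg_r D); auto; unfold Rdiv; rewrite Rmult_assoc, Rinv_l; lra.
Qed.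

Lemma rescale_props n f : (1 <= n)%nat -> smono n f ->
  rescale n f 0 = 0 /\ rescale n f n = 1 /\
  (forall j, (j < n)%nat -> rescale n f j < rescale n f (S j)) /\
  (forall j, (j <= n)%nat -> 0 <= rescale n f j <= 1).
Proof.
  intros Hn Hf; destruct (smono_lt n f Hf) as (sg & Hsg & H).
  assert (Hd : 0 < sg * (f n - f 0%nat))
    by (specialize (H 0%nat n ltac:(lia) ltac:(lia)); lra).
  assert (Hd' : f n - f 0%nat <> 0) by (intros E; rewrite E in Hd; lra).
  assert (E : forall j, rescale n f j = sg * (f j - f 0%nat) / (sg * (f n - f 0%nat))).
  { intros j; unfold rescale; field; split; auto; destruct Hsg; lra. }
  unfold sign_unit in Hsg.
  split; [|split; [|split]].
  - unfold rescale; unfold Rdiv; rewrite Rminus_diag; ring.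
  - unfold rescale; field; auto.
  - intros j Hj; rewrite !E; apply Rmult_lt_compat_r; [apply Rinv_0_lt_compat; auto|].
    specialize (H j (S j) ltac:(lia) Hj); lra.
  - intros j Hj; rewrite E; apply frac_unit; auto; split.
    + destruct (Nat.eq_dec j 0) as [-> | ]; [lra | specialize (H 0%nat j ltac:(lia) Hj); lra].
    + destruct (Nat.eq_dec j n) as [-> | ]; [lra | specialize (H j n ltac:(lia) ltac:(lia)); lra].
Qed.

Lemma tangential_grid_of_net n (Q : nat -> nat -> pt)
    (P d : nat -> pt) (lam : nat -> nat -> R) (P' d' : nat -> pt) (mu : nat -> nat -> R) :
  (1 <= n)%nat ->
  (forall i j, (i <= n)%nat -> (j <= n)%nat -> Q i j = pl (P i) (lam i j) (d i)) ->
  (forall i j, (i <= n)%nat -> (j <= n)%nat -> Q i j = pl (P' j) (mu i j) (d' j)) ->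
  (forall i, (i <= n)%nat -> smono n (lam i)) ->
  (forall j, (j <= n)%nat -> smono n (fun i => mu i j)) ->
  (forall i j, (i < n)%nat -> (j < n)%nat ->
     tangential_cert (Q i j) (Q (S i) j) (Q (S i) (S j)) (Q i (S j))) ->
  tangential_grid n (Q 0%nat 0%nat) (Q n 0%nat) (Q n n) (Q 0%nat n).
Proof.
  intros Hn HL HM Hlam Hmu Hcell.
  assert (Row : forall i j, (i <= n)%nat -> (j <= n)%nat ->
    Q i j = lerp (Q i 0%nat) (Q i n) (rescale n (lam i) j)).
  { intros i j Hi Hj; rewrite !HL by lia; apply pl_lerp, smono_endpoints; auto. }
  assert (Col : forall i j, (i <= n)%nat -> (j <= n)%nat ->
    Q i j = lerp (Q 0%nat j) (Q n j) (rescale n (fun i => mu i j) i)).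
  { intros i j Hi Hj; rewrite !(HM _ j) by lia; apply pl_lerp.
    apply (smono_endpoints n (fun i => mu i j)); auto. }
  destruct (rescale_props n _ Hn (Hmu 0%nat ltac:(lia))) as (a1 & a2 & a3 & _).
  destruct (rescale_props n _ Hn (Hmu n ltac:(lia))) as (a1' & a2' & a3' & _).
  destruct (rescale_props n _ Hn (Hlam 0%nat ltac:(lia))) as (b1 & b2 & b3 & _).
  destruct (rescale_props n _ Hn (Hlam n ltac:(lia))) as (b1' & b2' & b3' & _).
  exists (rescale n (fun i => mu i 0%nat)), (rescale n (fun i => mu i n)),
    (rescale n (lam 0%nat)), (rescale n (lam n)), Q; split.
  - repeat split; auto.
    + rewrite <- (Col i 0%nat), <- (Col i n) by lia.
      exists (rescale n (lam i) j); split; [apply rescale_props; auto | apply Row; auto].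
    + rewrite <- (Row 0%nat j), <- (Row n j) by lia.
      exists (rescale n (fun i => mu i j) i); split; [apply rescale_props; auto | apply Col; auto].
  - intros i j Hi Hj; apply tangential_cert_tangential, Hcell; auto.
Qed.

(* The relation between the parameters of two lines of each pencil that makes the
   cell they bound tangential (see Lnet_cell_tangential and Hnet_cell_tangential). *)
Definition cell_ratio (t1 t2 u1 u2 : R) : Prop := t2 * u1 = t1 * u2 \/ t2 * u2 = t1 * u1.

Lemma nth_root x n : 0 < x -> (1 <= n)%nat -> exists q, 0 < q /\ q ^ n = x.
Proof.
  intros Hx Hn; assert (Hn' : 0 < INR n) by (apply lt_0_INR; lia).
  exists (Rpower x (/ INR n)); split; [apply exp_pos|].
  rewrite <- Rpower_pow by apply exp_pos.
  rewrite Rpower_mult, Rinv_l, Rpower_1; auto; lra.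
Qed.

Lemma geometric_smono n x0 q : 0 < x0 -> 0 < q -> q <> 1 -> smono n (fun j => x0 * q ^ j).
Proof.
  intros Hx Hq Hq1; simpl.
  destruct (Rlt_dec 1 q); [left | right]; intros j _; simpl;
    pose proof (pow_lt q j Hq); assert (0 < x0 * q ^ j) by nra; nra.
Qed.

(* Geometric progressions of parameters make every cell of the net tangential
   as soon as the outer quadrilateral is. *)
Lemma geometric_params n t0 tn u0 un : (1 <= n)%nat ->
  0 < t0 -> 0 < tn -> 0 < u0 -> 0 < un -> t0 <> tn -> cell_ratio t0 tn u0 un ->
  exists tt uu : nat -> R,
    tt 0%nat = t0 /\ tt n = tn /\ uu 0%nat = u0 /\ uu n = un /\
    smono n tt /\ smono n uu /\ (forall i, 0 < tt i) /\ (forall j, 0 < uu j) /\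
    (forall i j, cell_ratio (tt i) (tt (S i)) (uu j) (uu (S j))).
Proof.
  intros Hn Ht0 Htn Hu0 Hun Ht Hc.
  destruct (nth_root (tn / t0) n ltac:(apply Rdiv_lt_0_compat; auto) Hn) as (q & Hq & Hqn).
  assert (Hq1 : q <> 1) by (intros ->; rewrite pow1 in Hqn;
    apply Ht; apply (Rmult_eq_reg_r (/ t0)); [rewrite Rinv_r; lra | apply Rinv_neq_0_compat; lra]).
  assert (Hpos : forall x r j, 0 < x -> 0 < r -> 0 < x * r ^ j)
    by (intros; apply Rmult_lt_0_compat; auto; apply pow_lt; auto).
  exists (fun i => t0 * q ^ i).
  destruct Hc as [Hc | Hc].
  - (* un / u0 = tn / t0: both progressions have ratio q *)
    exists (fun j => u0 * q ^ j); simpl; repeat split; auto; try ring.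
    + rewrite Hqn; field; lra.
    + rewrite Hqn; apply (Rmult_eq_reg_r t0); [|lra]; field_simplify; lra.
    + apply geometric_smono; auto.
    + apply geometric_smono; auto.
    + intros i j; left; simpl; ring.
  - (* un / u0 = t0 / tn: the second progression has ratio 1 / q *)
    exists (fun j => u0 * (/ q) ^ j); simpl; repeat split; auto; try ring.
    + rewrite Hqn; field; lra.
    + rewrite pow_inv, Hqn; apply (Rmult_eq_reg_r tn); [|lra]; field_simplify; lra.
    + apply geometric_smono; auto.
    + apply geometric_smono; [auto | apply Rinv_0_lt_compat; auto |].
      intros E; apply Hq1; rewrite <- (Rinv_inv q), E; apply Rinv_1.
    + intros; apply Hpos; auto; apply Rinv_0_lt_compat; auto.
    + intros i j; right; simpl; field; lra.
Qed.

(* Sign of a real number (0 for 0). *)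
Definition sgn (x : R) : R := x / Rabs x.

Lemma sgn_unit x : x <> 0 -> sign_unit (sgn x).
Proof.
  intros Hx; unfold sgn; destruct (Rle_dec 0 x).
  - left; rewrite Rabs_right by lra; field; lra.
  - right; rewrite Rabs_left by lra; field; lra.
Qed.

Lemma sgn_abs x : x = sgn x * Rabs x.
Proof.
  unfold sgn; destruct (Req_dec x 0) as [-> | Hx]; [rewrite Rabs_R0; ring|].
  field; apply Rabs_no_R0; auto.
Qed.

Lemma sgn_mul_pos x p : 0 < p -> sgn (x * p) = sgn x.
Proof.
  intros Hp; unfold sgn; rewrite Rabs_mult, (Rabs_right p) by lra.
  destruct (Req_dec x 0) as [-> | Hx]; [rewrite Rabs_R0; unfold Rdiv; rewrite !Rmult_0_l; ring|].
  field; repeat split; try lra; apply Rabs_no_R0; auto.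
Qed.

Lemma sgn_opp x : sgn (- x) = - sgn x.
Proof. unfold sgn; rewrite Rabs_Ropp; unfold Rdiv; ring. Qed.

Lemma sgn_pos_mul x p : x <> 0 -> 0 < p -> 0 < sgn x * (x * p).
Proof.
  intros Hx Hp; rewrite (sgn_abs x) at 2.
  replace (sgn x * (sgn x * Rabs x * p)) with (sgn x * sgn x * (Rabs x * p)) by ring.
  rewrite (sign_unit_sq _ (sgn_unit x Hx)); pose proof (Rabs_pos_lt x Hx); nra.
Qed.

Lemma prod_sgn_abs x y k p : 0 < p -> x * y = k * p -> x * y = sgn k * Rabs x * Rabs y.
Proof.
  intros Hp E; rewrite Rmult_assoc, <- Rabs_mult, E, Rabs_mult, (Rabs_right p) by lra.
  rewrite (sgn_abs k) at 1; ring.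
Qed.

Lemma cross_pl P a b d Z : cross (pl P a d) (pl P b d) Z = (b - a) * wedge d (vec Z P).
Proof. unfold cross, pl, wedge, vec; simpl; ring. Qed.

Lemma dist_pl P a b d : dist (pl P a d) (pl P b d) = Rabs (b - a) * norm d.
Proof.
  rewrite dist_norm; unfold norm.
  replace (norm2 (vec (pl P b d) (pl P a d))) with (Rsqr (b - a) * norm2 d)
    by (unfold Rsqr, norm2, vec, pl; simpl; ring).
  rewrite sqrt_mult by (apply Rle_0_sqr || apply norm2_ge0); rewrite sqrt_Rsqr_abs; reflexivity.
Qed.

Lemma wedge_pl d P a w : wedge d (vec (pl P a w) P) = a * wedge d w.
Proof. unfold wedge, vec, pl; simpl; ring. Qed.

Lemma inner_side_pl s O r P d a1 a2 Z :
  0 < s * ((a2 - a1) * wedge d (vec Z P)) ->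
  (a2 - a1) * wedge d (vec O P) = s * r * (Rabs (a2 - a1) * norm d) ->
  inner_side s O r (pl P a1 d) (pl P a2 d) Z.
Proof. intros H1 H2; unfold inner_side; rewrite !cross_pl, dist_pl; auto. Qed.

Lemma inner_side_pl_inv s O r P d a1 a2 Z : inner_side s O r (pl P a1 d) (pl P a2 d) Z ->
  (a2 - a1) * wedge d (vec O P) = s * r * (Rabs (a2 - a1) * norm d).
Proof. intros [_ H]; rewrite cross_pl, dist_pl in H; exact H. Qed.

(* The pencils of lines through F = (-1, 0) and E = (1, 0): the F-line with parameter
   t > 0 has direction dF t, making the angle 2 atan t with FE; the E-line with parameter
   u makes the angle 2 atan u with EF (it is the mirror image of the F-line u). *)
Definition Fp : pt := (-1, 0).
Definition Ep : pt := (1, 0).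
Definition dF (t : R) : pt := (1 - t * t, 2 * t).
Definition dE (u : R) : pt := (- (1 - u * u), 2 * u).

Lemma norm_dF t : norm (dF t) = 1 + t * t.
Proof.
  unfold norm; replace (norm2 (dF t)) with ((1 + t * t) * (1 + t * t))
    by (unfold norm2, dF; simpl; ring).
  apply sqrt_square; nra.
Qed.

Lemma norm_dE u : norm (dE u) = 1 + u * u.
Proof.
  unfold norm; replace (norm2 (dE u)) with ((1 + u * u) * (1 + u * u))
    by (unfold norm2, dE; simpl; ring).
  apply sqrt_square; nra.
Qed.

Lemma wedge_dF t1 t2 : wedge (dF t1) (dF t2) = 2 * (t2 - t1) * (1 + t1 * t2).
Proof. unfold wedge, dF; simpl; ring. Qed.

Lemma wedge_dE u1 u2 : wedge (dE u1) (dE u2) = 2 * (u1 - u2) * (1 + u1 * u2).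
Proof. unfold wedge, dE; simpl; ring. Qed.

Lemma wedge_dE_mirror u w : wedge (dE u) w = wedge (dF u) (fst w, - snd w).
Proof. unfold wedge, dE, dF; simpl; ring. Qed.

(* A point at opposite signed distances c and -c from two F-lines through a common
   center, w being its position relative to that center, lies on a bisector of the two
   lines; this determines its height. *)
Lemma pencil_bisector t1 t2 c w : 0 < t1 -> 0 < t2 ->
  wedge (dF t1) w = c * (1 + t1 * t1) -> wedge (dF t2) w = - c * (1 + t2 * t2) ->
  snd w * (t2 - t1) = c * (t1 + t2).
Proof.
  intros H1 H2 E1 E2.
  assert (X1 : t2 * wedge (dF t1) w = t2 * (c * (1 + t1 * t1))) by (rewrite E1; ring).
  assert (X2 : t1 * wedge (dF t2) w = t1 * (- c * (1 + t2 * t2))) by (rewrite E2; ring).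
  assert (X : (snd w * (t2 - t1) - c * (t1 + t2)) * (1 + t1 * t2) = 0)
    by (unfold wedge, dF in X1, X2; simpl in X1, X2; lra).
  apply Rmult_integral in X as [X | X]; nra.
Qed.

Lemma cell_ratio_of_abs t1 t2 u1 u2 : 0 < t1 -> 0 < t2 -> 0 < u1 -> 0 < u2 ->
  Rabs (t2 - t1) * (u1 + u2) = Rabs (u1 - u2) * (t1 + t2) -> cell_ratio t1 t2 u1 u2.
Proof.
  intros h1 h2 h3 h4 G; unfold cell_ratio.
  destruct (Rle_dec t1 t2), (Rle_dec u2 u1).
  - rewrite !Rabs_right in G by lra; right; nra.
  - rewrite Rabs_right, Rabs_left in G by lra; left; nra.
  - rewrite Rabs_left, Rabs_right in G by lra; left; nra.
  - rewrite !Rabs_left in G by lra; right; nra.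
Qed.

Lemma signed_distance a W s r N : a <> 0 -> a * W = s * r * (Rabs a * N) -> W = s * r * sgn a * N.
Proof.
  intros Ha E; pose proof (sign_unit_sq _ (sgn_unit a Ha)) as Hs.
  pose proof (Rabs_pos_lt a Ha).
  replace (a * W) with (sgn a * Rabs a * W) in E by (rewrite <- sgn_abs; reflexivity).
  apply (Rmult_eq_reg_l (Rabs a)); [|lra].
  transitivity (sgn a * (sgn a * Rabs a * W)); [rewrite <- Rmult_assoc, <- (Rmult_assoc (sgn a)), Hs; ring|].
  rewrite E; ring.
Qed.

Lemma Rabs_signed s r s' : sign_unit s -> sign_unit s' -> 0 < r -> Rabs (s * r * s') = r.
Proof. intros [-> | ->] [-> | ->] Hr; unfold Rabs; destruct Rcase_abs; lra. Qed.

(* The center of a tangential cell has height y with y (t2 - t1) = +-r (t1 + t2) and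
   y (u1 - u2) = +-r (u1 + u2); eliminating y and r gives the cell relation. *)
Lemma cell_ratio_of_center y c c' r t1 t2 u1 u2 : 0 < t1 -> 0 < t2 -> 0 < u1 -> 0 < u2 -> 0 < r ->
  Rabs c = r -> Rabs c' = r -> y * (t2 - t1) = c * (t1 + t2) -> y * (u1 - u2) = c' * (u1 + u2) ->
  cell_ratio t1 t2 u1 u2.
Proof.
  intros h1 h2 h3 h4 Hr Hc Hc' E E'.
  apply (f_equal Rabs) in E, E'; rewrite !Rabs_mult, Hc, (Rabs_right (t1 + t2)) in E by lra.
  rewrite !Rabs_mult, Hc', (Rabs_right (u1 + u2)) in E' by lra.
  assert (Hy : 0 < Rabs y).
  { destruct (Rabs_pos y) as [| Hy]; auto; rewrite <- Hy in E; nra. }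
  apply cell_ratio_of_abs; auto; apply (Rmult_eq_reg_l (Rabs y)); [|lra].
  replace (Rabs y * (Rabs (t2 - t1) * (u1 + u2))) with (Rabs y * Rabs (t2 - t1) * (u1 + u2)) by ring.
  replace (Rabs y * (Rabs (u1 - u2) * (t1 + t2))) with (Rabs y * Rabs (u1 - u2) * (t1 + t2)) by ring.
  rewrite E, E'; ring.
Qed.

(* For admissible parameters (okL: t, u > 0, t u < 1) the F-line t and the E-line u meet
   in the upper half-plane at Lp t u, which has coordinate lam t u on the first line and
   mu t u on the second. *)
Definition okL (t u : R) : Prop := 0 < t /\ 0 < u /\ t * u < 1.
Definition lam (t u : R) : R := 2 * u / ((t + u) * (1 - t * u)).
Definition mu (t u : R) : R := 2 * t / ((t + u) * (1 - t * u)).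
Definition Lp (t u : R) : pt := pl Fp (lam t u) (dF t).

Lemma Lp_E t u : okL t u -> Lp t u = pl Ep (mu t u) (dE u).
Proof.
  intros (h1 & h2 & h3); unfold Lp, pl, Fp, Ep, lam, mu, dF, dE; simpl.
  f_equal; field; split; nra.
Qed.

Lemma mu_incr t t' u : okL t u -> okL t' u -> exists p, 0 < p /\ mu t' u - mu t u = (t' - t) * p.
Proof.
  intros (a & b & c) (d & e & f).
  assert (0 < (t + u) * (1 - t * u)) by nra. assert (0 < (t' + u) * (1 - t' * u)) by nra.
  exists (2 * u * (1 + t * t') / (((t + u) * (1 - t * u)) * ((t' + u) * (1 - t' * u)))).
  split; [apply Rdiv_lt_0_compat; [apply Rmult_lt_0_compat|]; nra | unfold mu; field; repeat split; nra].
Qed.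

Lemma lam_incr t u u' : okL t u -> okL t u' -> exists p, 0 < p /\ lam t u' - lam t u = (u' - u) * p.
Proof.
  intros (a & b & c) (d & e & f).
  assert (0 < (t + u) * (1 - t * u)) by nra. assert (0 < (t + u') * (1 - t * u')) by nra.
  exists (2 * t * (1 + u * u') / (((t + u) * (1 - t * u)) * ((t + u') * (1 - t * u')))).
  split; [apply Rdiv_lt_0_compat; [apply Rmult_lt_0_compat|]; nra | unfold lam; field; repeat split; nra].
Qed.

Lemma mu_pos t u : okL t u -> 0 < mu t u.
Proof. intros (a & b & c); unfold mu; apply Rdiv_lt_0_compat; nra. Qed.

Lemma lam_pos t u : okL t u -> 0 < lam t u.
Proof. intros (a & b & c); unfold lam; apply Rdiv_lt_0_compat; nra. Qed.

Lemma okL_box t0 tn u0 un t u : okL t0 u0 -> okL tn u0 -> okL tn un -> okL t0 un ->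
  (t0 <= t <= tn \/ tn <= t <= t0) -> (u0 <= u <= un \/ un <= u <= u0) -> okL t u.
Proof.
  unfold okL; intros (a1 & a2 & a3) (b1 & b2 & b3) (c1 & c2 & c3) (d1 & d2 & d3) Ht Hu.
  destruct Ht as [[h1 h2] | [h1 h2]], Hu as [[k1 k2] | [k1 k2]];
    (split; [lra | split; [lra |]]).
  - assert (t * u <= tn * un) by (apply Rmult_le_compat; lra); lra.
  - assert (t * u <= tn * u0) by (apply Rmult_le_compat; lra); lra.
  - assert (t * u <= t0 * un) by (apply Rmult_le_compat; lra); lra.
  - assert (t * u <= t0 * u0) by (apply Rmult_le_compat; lra); lra.
Qed.

(* The incircle of the cell bounded by the F-lines t1, t2 and the E-lines u1, u2: its
   center lies on the bisector (direction wE u1 u2) of the E-lines and on the bisector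
   (direction wF t1 t2) of the F-lines. *)
Definition wF (t1 t2 : R) : pt := (1 - t1 * t2, t1 + t2).
Definition wE (u1 u2 : R) : pt := (- (1 - u1 * u2), u1 + u2).
Definition Lden (t1 t2 u1 u2 : R) : R := (u1 + u2) * (1 - t1 * t2) + (t1 + t2) * (1 - u1 * u2).
Definition lamo (t1 t2 u1 u2 : R) : R := 2 * (u1 + u2) / Lden t1 t2 u1 u2.
Definition muo (t1 t2 u1 u2 : R) : R := 2 * (t1 + t2) / Lden t1 t2 u1 u2.
Definition Lcenter (t1 t2 u1 u2 : R) : pt := pl Ep (muo t1 t2 u1 u2) (wE u1 u2).
Definition Lradius (t1 t2 u1 u2 : R) : R := muo t1 t2 u1 u2 * Rabs (u1 - u2).

Lemma wedge_dF_wF t1 t2 : wedge (dF t2) (wF t1 t2) = (t1 - t2) * (1 + t2 * t2).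
Proof. unfold wedge, dF, wF; simpl; ring. Qed.

Lemma wedge_dE_wE u1 u2 : wedge (dE u1) (wE u1 u2) = (u1 - u2) * (1 + u1 * u1).
Proof. unfold wedge, dE, wE; simpl; ring. Qed.

Lemma Lden_pos t1 t2 u1 u2 : okL t1 u1 -> okL t2 u2 -> 0 < Lden t1 t2 u1 u2.
Proof.
  intros (a & b & c) (d & e & f).
  replace (Lden t1 t2 u1 u2) with ((t1 + u1) * (1 - t2 * u2) + (t2 + u2) * (1 - t1 * u1))
    by (unfold Lden; ring); nra.
Qed.

Lemma Lcenter_F t1 t2 u1 u2 : okL t1 u1 -> okL t2 u2 ->
  Lcenter t1 t2 u1 u2 = pl Fp (lamo t1 t2 u1 u2) (wF t1 t2).
Proof.
  intros H1 H2; pose proof (Lden_pos _ _ _ _ H1 H2).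
  unfold Lcenter, pl, Fp, Ep, lamo, muo, wF, wE, Lden in *; simpl; f_equal; field; lra.
Qed.

(* Under the cell relation the center is equidistant from the four lines. *)
Lemma Lradius_F t1 t2 u1 u2 : okL t1 u1 -> okL t2 u2 -> cell_ratio t1 t2 u1 u2 ->
  Lradius t1 t2 u1 u2 = lamo t1 t2 u1 u2 * Rabs (t1 - t2).
Proof.
  intros H1 H2 Hc; pose proof (Lden_pos _ _ _ _ H1 H2) as HD.
  destruct H1 as (a & b & c), H2 as (d & e & f).
  assert (E1 : Lradius t1 t2 u1 u2 = 2 / Lden t1 t2 u1 u2 * Rabs ((t1 + t2) * (u1 - u2)))
    by (unfold Lradius, muo; rewrite Rabs_mult, (Rabs_right (t1 + t2)) by lra; field; lra).
  assert (E2 : lamo t1 t2 u1 u2 * Rabs (t1 - t2) = 2 / Lden t1 t2 u1 u2 * Rabs ((u1 + u2) * (t1 - t2)))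
    by (unfold lamo; rewrite Rabs_mult, (Rabs_right (u1 + u2)) by lra; field; lra).
  rewrite E1, E2; f_equal.
  destruct Hc as [Hc | Hc]; [|rewrite <- Rabs_Ropp]; f_equal; nra.
Qed.

Lemma cell_ratio_swap t1 t2 u1 u2 : cell_ratio t1 t2 u1 u2 -> cell_ratio t2 t1 u2 u1.
Proof. unfold cell_ratio; lra. Qed.

Lemma Lcell_side_E t1 t2 u1 u2 : okL t1 u1 -> okL t2 u1 -> okL t2 u2 -> t1 <> t2 -> u1 <> u2 ->
  inner_side (sgn ((t2 - t1) * (u1 - u2))) (Lcenter t1 t2 u1 u2) (Lradius t1 t2 u1 u2)
    (Lp t1 u1) (Lp t2 u1) (Lp t2 u2).
Proof.
  intros H11 H21 H22 Ht Hu.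
  assert (Hk : (t2 - t1) * (u1 - u2) <> 0) by (apply Rmult_integral_contrapositive; lra).
  destruct (mu_incr t1 t2 u1 H11 H21) as (p & Hp & Ed).
  rewrite (Lp_E t1 u1), (Lp_E t2 u1), (Lp_E t2 u2) by auto.
  apply inner_side_pl; rewrite Ed.
  - rewrite wedge_pl, wedge_dE; pose proof (mu_pos _ _ H22); destruct H11 as (? & ? & ?), H22 as (? & ? & ?).
    replace ((t2 - t1) * p * (mu t2 u2 * (2 * (u1 - u2) * (1 + u1 * u2))))
      with ((t2 - t1) * (u1 - u2) * (p * mu t2 u2 * 2 * (1 + u1 * u2))) by ring.
    apply sgn_pos_mul; auto.
    apply Rmult_lt_0_compat; [apply Rmult_lt_0_compat; [apply Rmult_lt_0_compat|]|]; nra.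
  - unfold Lcenter, Lradius; rewrite wedge_pl, wedge_dE_wE, norm_dE.
    assert (S : (t2 - t1) * p * (u1 - u2) = sgn ((t2 - t1) * (u1 - u2)) * Rabs ((t2 - t1) * p) * Rabs (u1 - u2))
      by (apply (prod_sgn_abs _ _ _ p); auto; ring).
    transitivity ((t2 - t1) * p * (u1 - u2) * (muo t1 t2 u1 u2 * (1 + u1 * u1))); [ring|].
    rewrite S; ring.
Qed.

Lemma Lcell_side_F t1 t2 u1 u2 : okL t1 u1 -> okL t2 u1 -> okL t2 u2 -> okL t1 u2 ->
  t1 <> t2 -> u1 <> u2 -> cell_ratio t1 t2 u1 u2 ->
  inner_side (sgn ((t2 - t1) * (u1 - u2))) (Lcenter t1 t2 u1 u2) (Lradius t1 t2 u1 u2)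
    (Lp t2 u1) (Lp t2 u2) (Lp t1 u2).
Proof.
  intros H11 H21 H22 H12 Ht Hu Hc.
  assert (Hk : (t2 - t1) * (u1 - u2) <> 0) by (apply Rmult_integral_contrapositive; lra).
  destruct (lam_incr t2 u1 u2 H21 H22) as (p & Hp & Ed).
  unfold Lp; apply inner_side_pl; rewrite Ed.
  - rewrite wedge_pl, wedge_dF; pose proof (lam_pos _ _ H12); destruct H11 as (? & ? & ?), H22 as (? & ? & ?).
    replace ((u2 - u1) * p * (lam t1 u2 * (2 * (t1 - t2) * (1 + t2 * t1))))
      with ((t2 - t1) * (u1 - u2) * (p * lam t1 u2 * 2 * (1 + t1 * t2))) by ring.
    apply sgn_pos_mul; auto.
    apply Rmult_lt_0_compat; [apply Rmult_lt_0_compat; [apply Rmult_lt_0_compat|]|]; nra.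
  - rewrite Lcenter_F, Lradius_F, wedge_pl, wedge_dF_wF, norm_dF by auto.
    assert (S : (u2 - u1) * p * (t1 - t2) = sgn ((t2 - t1) * (u1 - u2)) * Rabs ((u2 - u1) * p) * Rabs (t1 - t2))
      by (apply (prod_sgn_abs _ _ _ p); auto; ring).
    transitivity ((u2 - u1) * p * (t1 - t2) * (lamo t1 t2 u1 u2 * (1 + t2 * t2))); [ring|].
    rewrite S; ring.
Qed.

(* The cell data are invariant under exchanging both pairs of lines, which maps
   the sides on the E-line u1 and the F-line t2 to the two remaining sides. *)
Lemma Lcell_swap t1 t2 u1 u2 :
  sgn ((t1 - t2) * (u2 - u1)) = sgn ((t2 - t1) * (u1 - u2)) /\
  Lcenter t2 t1 u2 u1 = Lcenter t1 t2 u1 u2 /\ Lradius t2 t1 u2 u1 = Lradius t1 t2 u1 u2.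
Proof.
  assert (Hm : muo t2 t1 u2 u1 = muo t1 t2 u1 u2)
    by (unfold muo, Lden, Rdiv; f_equal; [ring | f_equal; ring]).
  split; [|split].
  - f_equal; ring.
  - unfold Lcenter, wE; rewrite Hm; f_equal; f_equal; ring.
  - unfold Lradius; rewrite Hm, Rabs_minus_sym; reflexivity.
Qed.

Lemma Lnet_cell_tangential t1 t2 u1 u2 : okL t1 u1 -> okL t2 u1 -> okL t2 u2 -> okL t1 u2 ->
  t1 <> t2 -> u1 <> u2 -> cell_ratio t1 t2 u1 u2 ->
  tangential_cert (Lp t1 u1) (Lp t2 u1) (Lp t2 u2) (Lp t1 u2).
Proof.
  intros H11 H21 H22 H12 Ht Hu Hc.
  destruct (Lcell_swap t1 t2 u1 u2) as (Es & Eo & Er).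
  exists (sgn ((t2 - t1) * (u1 - u2))), (Lcenter t1 t2 u1 u2), (Lradius t1 t2 u1 u2).
  split; [apply sgn_unit, Rmult_integral_contrapositive; lra|].
  split.
  { unfold Lradius, muo; pose proof (Lden_pos _ _ _ _ H11 H22); destruct H11, H22.
    apply Rmult_lt_0_compat; [apply Rdiv_lt_0_compat; lra | apply Rabs_pos_lt; lra]. }
  split; [apply Lcell_side_E; auto|].
  split; [apply Lcell_side_F; auto|].
  rewrite <- Es, <- Eo, <- Er; split.
  - apply Lcell_side_E; auto.
  - apply Lcell_side_F; auto; apply cell_ratio_swap; auto.
Qed.

Lemma Lnet_cell_ratio t1 t2 u1 u2 : okL t1 u1 -> okL t2 u1 -> okL t2 u2 -> okL t1 u2 ->
  t1 <> t2 -> u1 <> u2 ->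
  tangential_cert (Lp t1 u1) (Lp t2 u1) (Lp t2 u2) (Lp t1 u2) -> cell_ratio t1 t2 u1 u2.
Proof.
  intros H11 H21 H22 H12 Ht Hu (s & O & r & Hs & Hr & S1 & S2 & S3 & S4).
  assert (Hnz : forall x p, x <> 0 -> 0 < p -> x * p <> 0)
    by (intros; apply Rmult_integral_contrapositive; split; lra).
  destruct (lam_incr t2 u1 u2 H21 H22) as (p2 & Hp2 & Ed2).
  destruct (lam_incr t1 u2 u1 H12 H11) as (p4 & Hp4 & Ed4).
  unfold Lp in S2, S4; apply inner_side_pl_inv in S2, S4.
  rewrite Ed2 in S2; rewrite Ed4 in S4.
  apply signed_distance in S2; [|apply Hnz; lra]; apply signed_distance in S4; [|apply Hnz; lra].
  rewrite sgn_mul_pos, norm_dF in S2, S4 by auto.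
  replace (u2 - u1) with (- (u1 - u2)) in S2 by ring; rewrite sgn_opp in S2.
  destruct (mu_incr t1 t2 u1 H11 H21) as (p1 & Hp1 & Ed1).
  destruct (mu_incr t2 t1 u2 H22 H12) as (p3 & Hp3 & Ed3).
  rewrite (Lp_E t1 u1), (Lp_E t2 u1) in S1 by auto.
  rewrite (Lp_E t2 u2), (Lp_E t1 u2) in S3 by auto.
  apply inner_side_pl_inv in S1, S3.
  rewrite Ed1 in S1; rewrite Ed3 in S3.
  apply signed_distance in S1; [|apply Hnz; lra]; apply signed_distance in S3; [|apply Hnz; lra].
  rewrite sgn_mul_pos, norm_dE, wedge_dE_mirror in S1, S3 by auto.
  replace (t1 - t2) with (- (t2 - t1)) in S3 by ring; rewrite sgn_opp in S3.
  destruct H11 as (? & ? & ?), H22 as (? & ? & ?).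
  assert (Yt : snd (vec O Fp) * (t2 - t1) = s * r * sgn (u1 - u2) * (t1 + t2))
    by (apply pencil_bisector; auto; rewrite S2; ring).
  assert (Yu : snd (fst (vec O Ep), - snd (vec O Ep)) * (u2 - u1) = s * r * sgn (t2 - t1) * (u1 + u2))
    by (apply pencil_bisector; auto; rewrite S3; ring).
  apply (cell_ratio_of_center (snd O) (s * r * sgn (u1 - u2)) (s * r * sgn (t2 - t1)) r);
    auto; try (apply Rabs_signed; auto; apply sgn_unit; lra).
  - rewrite <- Yt; unfold vec, Fp; simpl; ring.
  - transitivity (- (- snd (vec O Ep)) * (u1 - u2)); [unfold vec, Ep; simpl; ring|].
    rewrite <- Yu; simpl; ring.
Qed.

Lemma Lnet_tangential_grid n t0 tn u0 un : (1 <= n)%nat ->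
  okL t0 u0 -> okL tn u0 -> okL tn un -> okL t0 un -> t0 <> tn -> cell_ratio t0 tn u0 un ->
  tangential_grid n (Lp t0 u0) (Lp tn u0) (Lp tn un) (Lp t0 un).
Proof.
  intros Hn H00 Hn0 Hnn H0n Ht Hc.
  destruct (geometric_params n t0 tn u0 un) as
    (tt & uu & Et0 & Etn & Eu0 & Eun & Stt & Suu & _ & _ & Hcell); auto;
    try apply H00; try apply Hnn.
  assert (Hok : forall i j, (i <= n)%nat -> (j <= n)%nat -> okL (tt i) (uu j)).
  { intros i j Hi Hj; apply (okL_box t0 tn u0 un); auto.
    - rewrite <- Et0, <- Etn; apply smono_between; auto.
    - rewrite <- Eu0, <- Eun; apply smono_between; auto. }
  rewrite <- Et0, <- Etn, <- Eu0, <- Eun.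
  apply (tangential_grid_of_net n (fun i j => Lp (tt i) (uu j))
    (fun _ => Fp) (fun i => dF (tt i)) (fun i j => lam (tt i) (uu j))
    (fun _ => Ep) (fun j => dE (uu j)) (fun i j => mu (tt i) (uu j))); auto.
  - intros i j Hi Hj; apply Lp_E, Hok; auto.
  - intros i Hi; apply (smono_transfer n uu); auto; intros j Hj; apply lam_incr; apply Hok; lia.
  - intros j Hj; apply (smono_transfer n tt); auto; intros i Hi; apply mu_incr; apply Hok; lia.
  - intros i j Hi Hj; apply Lnet_cell_tangential; try apply Hok; try lia; auto;
      apply smono_step with n; auto.
Qed.

(* The H-net: the pencil of F-lines through the origin F0 and the horizontal lines.
   Hp t h is the point at height h on the F-line t; on its horizontal line, oriented
   leftwards, it has coordinate hx t h. *)
Definition F0 : pt := (0, 0).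
Definition leftward : pt := (-1, 0).
Definition hx (t h : R) : R := h * (t * t - 1) / (2 * t).
Definition Hp (t h : R) : pt := pl F0 (h / (2 * t)) (dF t).

Lemma Hp_horizontal t h : 0 < t -> Hp t h = pl (0, h) (hx t h) leftward.
Proof. intros; unfold Hp, pl, F0, hx, dF, leftward; simpl; f_equal; field; lra. Qed.

Lemma norm_leftward : norm leftward = 1.
Proof.
  unfold norm, norm2, leftward; simpl; replace (-1 * -1 + 0 * 0) with 1 by ring; apply sqrt_1.
Qed.

Lemma wedge_leftward P h : wedge leftward (vec P (0, h)) = h - snd P.
Proof. unfold wedge, leftward, vec; simpl; ring. Qed.

Lemma hx_incr t t' h : 0 < t -> 0 < t' -> 0 < h ->
  exists p, 0 < p /\ hx t' h - hx t h = (t' - t) * p.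
Proof.
  intros H1 H2 H3; assert (0 < t * t') by nra.
  exists (h * (1 + t * t') / (2 * t * t')); split.
  - apply Rdiv_lt_0_compat; nra.
  - unfold hx; field; lra.
Qed.

Lemma height_incr t h h' : 0 < t -> h' / (2 * t) - h / (2 * t) = (h' - h) * / (2 * t).
Proof. intros; field; lra. Qed.

Definition Hcenter (t1 t2 h1 h2 : R) : pt := pl F0 ((h1 + h2) / (2 * (t1 + t2))) (wF t1 t2).
Definition Hradius (h1 h2 : R) : R := Rabs (h1 - h2) / 2.

(* The center lies at mid-height between the horizontal sides, at distance r from them;
   under the cell relation it is at the same distance from the F-lines. *)
Lemma Hcenter_height t1 t2 h1 h2 : 0 < t1 -> 0 < t2 -> snd (Hcenter t1 t2 h1 h2) = (h1 + h2) / 2.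
Proof. intros; unfold Hcenter, pl, F0, wF; simpl; field; lra. Qed.

Lemma Hradius_F t1 t2 h1 h2 : 0 < t1 -> 0 < t2 -> 0 < h1 -> 0 < h2 -> cell_ratio t1 t2 h1 h2 ->
  Hradius h1 h2 = (h1 + h2) / (2 * (t1 + t2)) * Rabs (t1 - t2).
Proof.
  intros a b c d Hc; unfold Hradius.
  apply (Rmult_eq_reg_l (2 * (t1 + t2))); [|lra].
  transitivity (Rabs ((t1 + t2) * (h1 - h2))); [rewrite Rabs_mult, (Rabs_right (t1 + t2)) by lra; field|].
  transitivity (Rabs ((h1 + h2) * (t1 - t2))); [|rewrite Rabs_mult, (Rabs_right (h1 + h2)) by lra; field; lra].
  destruct Hc as [Hc | Hc]; [|rewrite <- Rabs_Ropp]; f_equal; nra.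
Qed.

Lemma Hcell_side_horizontal t1 t2 h1 h2 : 0 < t1 -> 0 < t2 -> 0 < h1 -> 0 < h2 ->
  t1 <> t2 -> h1 <> h2 ->
  inner_side (sgn ((t2 - t1) * (h1 - h2))) (Hcenter t1 t2 h1 h2) (Hradius h1 h2)
    (Hp t1 h1) (Hp t2 h1) (Hp t2 h2).
Proof.
  intros a b c d Ht Hh.
  assert (Hk : (t2 - t1) * (h1 - h2) <> 0) by (apply Rmult_integral_contrapositive; lra).
  destruct (hx_incr t1 t2 h1) as (p & Hp' & Ed); auto.
  rewrite (Hp_horizontal t1 h1), (Hp_horizontal t2 h1) by auto.
  apply inner_side_pl; rewrite Ed, wedge_leftward.
  - replace (h1 - snd (Hp t2 h2)) with (h1 - h2) by (unfold Hp, pl, F0, dF; simpl; field; lra).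
    replace ((t2 - t1) * p * (h1 - h2)) with ((t2 - t1) * (h1 - h2) * p) by ring.
    apply sgn_pos_mul; auto.
  - rewrite Hcenter_height, norm_leftward by auto; unfold Hradius.
    assert (S : (t2 - t1) * p * (h1 - h2) = sgn ((t2 - t1) * (h1 - h2)) * Rabs ((t2 - t1) * p) * Rabs (h1 - h2))
      by (apply (prod_sgn_abs _ _ _ p); auto; ring).
    transitivity ((t2 - t1) * p * (h1 - h2) / 2); [field|].
    rewrite S; field.
Qed.

Lemma Hcell_side_F t1 t2 h1 h2 : 0 < t1 -> 0 < t2 -> 0 < h1 -> 0 < h2 ->
  t1 <> t2 -> h1 <> h2 -> cell_ratio t1 t2 h1 h2 ->
  inner_side (sgn ((t2 - t1) * (h1 - h2))) (Hcenter t1 t2 h1 h2) (Hradius h1 h2)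
    (Hp t2 h1) (Hp t2 h2) (Hp t1 h2).
Proof.
  intros a b c d Ht Hh Hc.
  assert (Hk : (t2 - t1) * (h1 - h2) <> 0) by (apply Rmult_integral_contrapositive; lra).
  assert (Hp' : 0 < / (2 * t2)) by (apply Rinv_0_lt_compat; lra).
  unfold Hp; apply inner_side_pl; rewrite height_incr by auto.
  - rewrite wedge_pl, wedge_dF.
    replace ((h2 - h1) * / (2 * t2) * (h2 / (2 * t1) * (2 * (t1 - t2) * (1 + t2 * t1))))
      with ((t2 - t1) * (h1 - h2) * (/ (2 * t2) * (h2 / (2 * t1)) * 2 * (1 + t1 * t2))) by ring.
    apply sgn_pos_mul; auto.
    apply Rmult_lt_0_compat; [apply Rmult_lt_0_compat; [apply Rmult_lt_0_compat|]|]; try nra.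
    apply Rdiv_lt_0_compat; lra.
  - unfold Hcenter; rewrite (Hradius_F t1 t2), wedge_pl, wedge_dF_wF, norm_dF by auto.
    assert (S : (h2 - h1) * / (2 * t2) * (t1 - t2) =
                sgn ((t2 - t1) * (h1 - h2)) * Rabs ((h2 - h1) * / (2 * t2)) * Rabs (t1 - t2))
      by (apply (prod_sgn_abs _ _ _ (/ (2 * t2))); auto; ring).
    transitivity ((h2 - h1) * / (2 * t2) * (t1 - t2) * ((h1 + h2) / (2 * (t1 + t2)) * (1 + t2 * t2)));
      [ring|].
    rewrite S; ring.
Qed.

Lemma Hcell_swap t1 t2 h1 h2 :
  sgn ((t1 - t2) * (h2 - h1)) = sgn ((t2 - t1) * (h1 - h2)) /\
  Hcenter t2 t1 h2 h1 = Hcenter t1 t2 h1 h2 /\ Hradius h2 h1 = Hradius h1 h2.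
Proof.
  split; [|split].
  - f_equal; ring.
  - unfold Hcenter, wF; f_equal; [f_equal; ring | f_equal; ring].
  - unfold Hradius; rewrite Rabs_minus_sym; reflexivity.
Qed.

Lemma Hnet_cell_tangential t1 t2 h1 h2 : 0 < t1 -> 0 < t2 -> 0 < h1 -> 0 < h2 ->
  t1 <> t2 -> h1 <> h2 -> cell_ratio t1 t2 h1 h2 ->
  tangential_cert (Hp t1 h1) (Hp t2 h1) (Hp t2 h2) (Hp t1 h2).
Proof.
  intros a b c d Ht Hh Hc.
  destruct (Hcell_swap t1 t2 h1 h2) as (Es & Eo & Er).
  exists (sgn ((t2 - t1) * (h1 - h2))), (Hcenter t1 t2 h1 h2), (Hradius h1 h2).
  split; [apply sgn_unit, Rmult_integral_contrapositive; lra|].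
  split; [unfold Hradius; pose proof (Rabs_pos_lt (h1 - h2)); lra|].
  split; [apply Hcell_side_horizontal; auto|].
  split; [apply Hcell_side_F; auto|].
  rewrite <- Es, <- Eo, <- Er; split.
  - apply Hcell_side_horizontal; auto.
  - apply Hcell_side_F; auto; apply cell_ratio_swap; auto.
Qed.

Lemma Hnet_cell_ratio t1 t2 h1 h2 : 0 < t1 -> 0 < t2 -> 0 < h1 -> 0 < h2 ->
  t1 <> t2 -> h1 <> h2 ->
  tangential_cert (Hp t1 h1) (Hp t2 h1) (Hp t2 h2) (Hp t1 h2) -> cell_ratio t1 t2 h1 h2.
Proof.
  intros a b c d Ht Hh (s & O & r & Hs & Hr & S1 & S2 & S3 & S4).
  assert (Hnz : forall x p, x <> 0 -> 0 < p -> x * p <> 0)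
    by (intros; apply Rmult_integral_contrapositive; split; lra).
  assert (Hi : forall t, 0 < t -> 0 < / (2 * t)) by (intros; apply Rinv_0_lt_compat; lra).
  unfold Hp in S2, S4; apply inner_side_pl_inv in S2, S4.
  rewrite height_incr in S2, S4 by auto.
  apply signed_distance in S2; [|apply Hnz; auto; lra]; apply signed_distance in S4; [|apply Hnz; auto; lra].
  rewrite sgn_mul_pos, norm_dF in S2, S4 by auto.
  replace (h2 - h1) with (- (h1 - h2)) in S2 by ring; rewrite sgn_opp in S2.
  assert (Yt : snd (vec O F0) * (t2 - t1) = s * r * sgn (h1 - h2) * (t1 + t2))
    by (apply pencil_bisector; auto; rewrite S2; ring).
  destruct (hx_incr t1 t2 h1) as (p1 & Hp1 & Ed1); auto.
  destruct (hx_incr t2 t1 h2) as (p3 & Hp3 & Ed3); auto.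
  rewrite (Hp_horizontal t1 h1), (Hp_horizontal t2 h1) in S1 by auto.
  rewrite (Hp_horizontal t2 h2), (Hp_horizontal t1 h2) in S3 by auto.
  apply inner_side_pl_inv in S1, S3.
  rewrite Ed1 in S1; rewrite Ed3 in S3.
  apply signed_distance in S1; [|apply Hnz; lra]; apply signed_distance in S3; [|apply Hnz; lra].
  rewrite sgn_mul_pos, norm_leftward, wedge_leftward in S1, S3 by auto.
  replace (t1 - t2) with (- (t2 - t1)) in S3 by ring; rewrite sgn_opp in S3.
  (* the center is at mid-height, at distance r from both horizontal lines *)
  apply (cell_ratio_of_center (snd O) (s * r * sgn (h1 - h2)) (s * r * sgn (t2 - t1)) r);
    auto; try (apply Rabs_signed; auto; apply sgn_unit; lra).
  - rewrite <- Yt; unfold vec, F0; simpl; ring.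
  - assert (Hy : snd O = (h1 + h2) / 2) by lra.
    assert (Hc : s * r * sgn (t2 - t1) = (h1 - h2) / 2) by lra.
    rewrite Hy, Hc; field.
Qed.

Lemma Hnet_tangential_grid n t0 tn h0 hn : (1 <= n)%nat ->
  0 < t0 -> 0 < tn -> 0 < h0 -> 0 < hn -> t0 <> tn -> cell_ratio t0 tn h0 hn ->
  tangential_grid n (Hp t0 h0) (Hp tn h0) (Hp tn hn) (Hp t0 hn).
Proof.
  intros Hn a b c d Ht Hc.
  destruct (geometric_params n t0 tn h0 hn) as
    (tt & hh & Et0 & Etn & Eh0 & Ehn & Stt & Shh & Ptt & Phh & Hcell); auto.
  rewrite <- Et0, <- Etn, <- Eh0, <- Ehn.
  apply (tangential_grid_of_net n (fun i j => Hp (tt i) (hh j))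
    (fun _ => F0) (fun i => dF (tt i)) (fun i j => hh j / (2 * tt i))
    (fun j => (0, hh j)) (fun _ => leftward) (fun i j => hx (tt i) (hh j))); auto.
  - intros i j _ _; apply Hp_horizontal; auto.
  - intros i Hi; apply (smono_transfer n hh); auto; intros j Hj.
    exists (/ (2 * tt i)); split; [apply Rinv_0_lt_compat; specialize (Ptt i); lra|].
    apply height_incr; auto.
  - intros j Hj; apply (smono_transfer n tt); auto; intros i Hi; apply hx_incr; auto.
  - intros i j Hi Hj; apply Hnet_cell_tangential; auto; apply smono_step with n; auto.
Qed.

Definition on_pencil (C : pt) (t : R) (p : pt) : Prop := wedge (dF t) (vec p C) = 0.

(* Every point above C lies on a line of the pencil with positive parameter
   t = tan (theta / 2), theta being the angle of the ray C p. *)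
Lemma pencil_exists C p : snd C < snd p -> exists t, 0 < t /\ on_pencil C t p.
Proof.
  intros Hp; set (x := fst p - fst C); set (y := snd p - snd C).
  assert (Hy : 0 < y) by (unfold y; lra).
  set (len := sqrt (x * x + y * y)).
  assert (HN : len * len = x * x + y * y) by (apply sqrt_sqrt; nra).
  assert (HNx : forall z, z * z = x * x -> z < len).
  { intros z Hz; pose proof (sqrt_pos (x * x + y * y)) as Hs; fold len in Hs.
    destruct (Rlt_dec z len) as [| Hx]; auto.
    assert (len * len <= z * z) by (apply Rmult_le_compat; lra); nra. }
  pose proof (HNx x eq_refl); pose proof (HNx (- x) ltac:(ring)).
  exists (y / (len + x)); split; [apply Rdiv_lt_0_compat; lra|].
  unfold on_pencil, wedge, dF, vec; simpl; fold x y.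
  field_simplify_eq; [nra | lra].
Qed.

Lemma pencil_collinear C t p q : snd C < snd p -> on_pencil C t p -> cross C p q = 0 ->
  on_pencil C t q.
Proof.
  unfold on_pencil; intros Hp E Hc.
  assert (X : wedge (dF t) (vec q C) * snd (vec p C)
              = cross C p q * snd (dF t) + wedge (dF t) (vec p C) * snd (vec q C))
    by (unfold wedge, cross, vec; simpl; ring).
  rewrite E, Hc, !Rmult_0_l, Rplus_0_l in X.
  change (snd (vec p C)) with (snd p - snd C) in X.
  apply Rmult_integral in X as [X | X]; lra.
Qed.

(* The mirror image in the y-axis exchanges the two pencils of the L-net. *)
Definition mirror (p : pt) : pt := (- fst p, snd p).

Lemma cross_mirror o p q : cross (mirror o) (mirror p) (mirror q) = - cross o p q.
Proof. unfold cross, mirror; simpl; ring. Qed.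

Lemma mirror_Ep : mirror Ep = Fp.
Proof. unfold mirror, Ep, Fp; simpl; f_equal; ring. Qed.

Lemma Lp_of_lines t u p : 0 < t -> 0 < u -> 0 < snd p ->
  on_pencil Fp t p -> on_pencil Fp u (mirror p) -> okL t u /\ p = Lp t u.
Proof.
  destruct p as [x y]; unfold on_pencil, wedge, dF, vec, Fp, mirror; simpl.
  intros Ht Hu Hy E1 E2.
  (* adding the two line equations gives 4 t u = y (t + u) (1 - t u) *)
  assert (K : 4 * t * u = y * (t + u) * (1 - t * u)).
  { assert (X1 : u * ((1 - t * t) * (y - 0) - 2 * t * (x - -1)) = 0) by (rewrite E1; ring).
    assert (X2 : t * ((1 - u * u) * (y - 0) - 2 * u * (- x - -1)) = 0) by (rewrite E2; ring).
    lra. }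
  assert (Htu : t * u < 1).
  { assert (P : 0 < y * (t + u)) by nra.
    destruct (Rlt_dec (t * u) 1) as [| Hc]; auto; nra. }
  split; [repeat split; auto|].
  unfold Lp, pl, lam, Fp, dF; simpl; f_equal; field_simplify_eq; try nra; split; nra.
Qed.

Lemma Hp_of_line t p : 0 < t -> on_pencil F0 t p -> p = Hp t (snd p).
Proof.
  destruct p as [x y]; unfold on_pencil, wedge, dF, vec, F0, Hp, pl; simpl; intros Ht E.
  f_equal; field_simplify_eq; lra.
Qed.

Lemma Lnet_coords a b c d : 0 < snd a -> 0 < snd b -> 0 < snd c -> 0 < snd d ->
  cross Fp a d = 0 -> cross Fp b c = 0 -> cross Ep a b = 0 -> cross Ep d c = 0 ->
  a <> b -> a <> d ->
  exists t0 tn u0 un, okL t0 u0 /\ okL tn u0 /\ okL tn un /\ okL t0 un /\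
    t0 <> tn /\ u0 <> un /\ a = Lp t0 u0 /\ b = Lp tn u0 /\ c = Lp tn un /\ d = Lp t0 un.
Proof.
  intros ya yb yc yd Had Hbc Hab Hdc Hne1 Hne2.
  assert (Hup : forall p : pt, 0 < snd p -> snd Fp < snd p) by (intros; unfold Fp; simpl; lra).
  assert (Hmir : forall p q, cross Ep p q = 0 -> cross Fp (mirror p) (mirror q) = 0)
    by (intros p q H; rewrite <- mirror_Ep, cross_mirror, H; ring).
  destruct (pencil_exists Fp a (Hup a ya)) as (t0 & Ht0 & Ha).
  destruct (pencil_exists Fp b (Hup b yb)) as (tn & Htn & Hb).
  destruct (pencil_exists Fp (mirror a) (Hup (mirror a) ya)) as (u0 & Hu0 & Ha').
  destruct (pencil_exists Fp (mirror d) (Hup (mirror d) yd)) as (un & Hun & Hd').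
  pose proof (pencil_collinear _ _ _ _ (Hup a ya) Ha Had) as Hd.
  pose proof (pencil_collinear _ _ _ _ (Hup b yb) Hb Hbc) as Hc.
  pose proof (pencil_collinear _ _ _ _ (Hup (mirror a) ya) Ha' (Hmir _ _ Hab)) as Hb'.
  pose proof (pencil_collinear _ _ _ _ (Hup (mirror d) yd) Hd' (Hmir _ _ Hdc)) as Hc'.
  destruct (Lp_of_lines t0 u0 a) as [O00 Ea]; auto.
  destruct (Lp_of_lines tn u0 b) as [On0 Eb]; auto.
  destruct (Lp_of_lines tn un c) as [Onn Ec]; auto.
  destruct (Lp_of_lines t0 un d) as [O0n Ed]; auto.
  exists t0, tn, u0, un; do 4 (split; [assumption |]).
  split; [intros ->; apply Hne1; rewrite Ea, Eb; reflexivity |].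
  split; [intros ->; apply Hne2; rewrite Ea, Ed; reflexivity |].
  auto.
Qed.

Lemma Hnet_coords a b c d : 0 < snd a -> 0 < snd d -> snd b = snd a -> snd c = snd d ->
  cross F0 a d = 0 -> cross F0 b c = 0 -> a <> b -> a <> d ->
  exists t0 tn h0 hn, 0 < t0 /\ 0 < tn /\ 0 < h0 /\ 0 < hn /\ t0 <> tn /\ h0 <> hn /\
    a = Hp t0 h0 /\ b = Hp tn h0 /\ c = Hp tn hn /\ d = Hp t0 hn.
Proof.
  intros ya yd yb yc Had Hbc Hne1 Hne2.
  assert (Hup : forall p : pt, 0 < snd p -> snd F0 < snd p) by (intros; unfold F0; simpl; lra).
  destruct (pencil_exists F0 a (Hup a ya)) as (t0 & Ht0 & Ha).
  assert (yb' : 0 < snd b) by lra.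
  destruct (pencil_exists F0 b (Hup b yb')) as (tn & Htn & Hb).
  pose proof (pencil_collinear _ _ _ _ (Hup a ya) Ha Had) as Hd.
  pose proof (pencil_collinear _ _ _ _ (Hup b yb') Hb Hbc) as Hc.
  assert (Ea := Hp_of_line _ _ Ht0 Ha); assert (Eb := Hp_of_line _ _ Htn Hb).
  assert (Ec := Hp_of_line _ _ Htn Hc); assert (Ed := Hp_of_line _ _ Ht0 Hd).
  rewrite yb in Eb; rewrite yc in Ec.
  exists t0, tn, (snd a), (snd d); do 4 (split; [assumption |]).
  split; [intros ->; apply Hne1; rewrite Ea, Eb; reflexivity |].
  split; [intros E; apply Hne2; rewrite Ea, Ed, E; reflexivity |].
  auto.
Qed.

Definition turns_with (s : R) (A B C D : pt) : Prop :=
  sign_unit s /\ 0 < s * cross A B C /\ 0 < s * cross B C D /\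
  0 < s * cross C D A /\ 0 < s * cross D A B.

Lemma cert_turns A B C D : tangential_cert A B C D -> exists s, turns_with s A B C D.
Proof. intros (s & O & r & Hs & _ & [H1 _] & [H2 _] & [H3 _] & [H4 _]); exists s; repeat split; auto. Qed.

Definition parallel (P Q R S : pt) : Prop := wedge (vec Q P) (vec S R) = 0.

Lemma turns_parallel_AB_CD A B C D : cross C D A - cross B C D = wedge (vec B A) (vec D C).
Proof. unfold cross, wedge, vec; simpl; ring. Qed.

Lemma turns_parallel_AD_BC A B C D : cross A B C - cross B C D = wedge (vec D A) (vec C B).
Proof. unfold cross, wedge, vec; simpl; ring. Qed.

Lemma diagonal_points A B C D s : turns_with s A B C D ->
  ~ parallel A B C D -> ~ parallel A D B C ->
  exists E F sg, sign_unit sg /\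
    cross E A B = 0 /\ cross E D C = 0 /\ cross F A D = 0 /\ cross F B C = 0 /\
    0 < sg * cross F E A /\ 0 < sg * cross F E B /\ 0 < sg * cross F E C /\ 0 < sg * cross F E D.
Proof.
  intros (Hs & HoD & HoA & HoB & HoC) HAB HAD.
  unfold parallel in HAB, HAD; rewrite <- turns_parallel_AB_CD in HAB; rewrite <- turns_parallel_AD_BC in HAD.
  set (oA := cross B C D) in *; set (oB := cross C D A) in *;
  set (oC := cross D A B) in *; set (oD := cross A B C) in *.
  assert (HBA : oB - oA <> 0) by lra; assert (HDA : oD - oA <> 0) by lra.
  set (al := oB / (oB - oA)); set (be := oD / (oD - oA)).
  exists (lerp A B al), (lerp A D be).
  set (E := lerp A B al) in *; set (F := lerp A D be) in *.
  set (kA := cross F E A).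
  assert (IA : kA = - (al * be * oC)) by (unfold kA, E, F, oC, cross, lerp; simpl; ring).
  assert (IB : oB * cross F E B = oA * kA).
  { unfold kA, E, F, al, be, oA, oB, oC, oD in *.
    destruct A as [x1 y1], B as [x2 y2], C as [x3 y3], D as [x4 y4].
    unfold cross, lerp in *; simpl in *; field; split; auto. }
  assert (IC : oC * cross F E C = oA * kA).
  { unfold kA, E, F, al, be, oA, oB, oC, oD in *.
    destruct A as [x1 y1], B as [x2 y2], C as [x3 y3], D as [x4 y4].
    unfold cross, lerp in *; simpl in *; field; split; auto. }
  assert (ID : oD * cross F E D = oA * kA).
  { unfold kA, E, F, al, be, oA, oB, oC, oD in *.
    destruct A as [x1 y1], B as [x2 y2], C as [x3 y3], D as [x4 y4].
    unfold cross, lerp in *; simpl in *; field; split; auto. }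
  assert (Hs2 := sign_unit_sq s Hs).
  assert (HkA : kA <> 0).
  { rewrite IA; assert (oC <> 0) by (intros E0; rewrite E0 in HoC; lra).
    assert (al <> 0) by (unfold al, Rdiv; apply Rmult_integral_contrapositive; split;
      [intros E0; rewrite E0 in HoB; lra | apply Rinv_neq_0_compat; auto]).
    assert (be <> 0) by (unfold be, Rdiv; apply Rmult_integral_contrapositive; split;
      [intros E0; rewrite E0 in HoD; lra | apply Rinv_neq_0_compat; auto]).
    intros X0; assert (X : al * be * oC = 0) by lra.
    apply Rmult_integral in X as [X | X]; [apply Rmult_integral in X as [X | X] |]; auto. }
  assert (Hside : forall oP P, s * oP > 0 -> oP * cross F E P = oA * kA -> 0 < sgn kA * cross F E P).
  { intros oP P HoP HP.
    assert (HoP' : oP <> 0) by (intros E0; rewrite E0 in HoP; lra).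
    replace (cross F E P) with (oA * oP / (oP * oP) * kA) by (field_simplify_eq; [lra | auto]).
    rewrite Rmult_comm, Rmult_assoc; apply Rmult_lt_0_compat.
    - apply Rdiv_lt_0_compat; [nra | pose proof (Rsqr_pos_lt oP HoP'); unfold Rsqr in *; lra].
    - rewrite Rmult_comm; apply (sgn_pos_mul kA 1) in HkA; lra. }
  exists (sgn kA); split; [apply sgn_unit; auto|].
  repeat split.
  - unfold E, cross, lerp; simpl; ring.
  - unfold E, al, oA, oB in *; destruct A as [x1 y1], B as [x2 y2], C as [x3 y3], D as [x4 y4].
    unfold cross, lerp in *; simpl in *; field; auto.
  - unfold F, cross, lerp; simpl; ring.
  - unfold F, be, oA, oD in *; destruct A as [x1 y1], B as [x2 y2], C as [x3 y3], D as [x4 y4].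
    unfold cross, lerp in *; simpl in *; field; auto.
  - apply (Hside oA); [lra | reflexivity].
  - apply (Hside oB); auto; lra.
  - apply (Hside oC); auto; lra.
  - apply (Hside oD); auto; lra.
Qed.

Lemma sim_collinear M e sg p q r : sign_unit sg -> e <> (0, 0) ->
  cross (sim M e sg p) (sim M e sg q) (sim M e sg r) = 0 -> cross p q r = 0.
Proof.
  intros Hs He H; rewrite cross_sim in H; pose proof (norm2_pos e He).
  apply Rmult_integral in H as [H | H]; auto.
  apply Rmult_integral in H as [H | H]; [destruct Hs; lra | lra].
Qed.

Lemma sim_frame_inverse M e sg A B C D : sign_unit sg -> e <> (0, 0) ->
  exists a b c d, A = sim M e sg a /\ B = sim M e sg b /\ C = sim M e sg c /\ D = sim M e sg d.
Proof.
  intros Hs He; destruct (sim_inverse M e sg Hs He) as (M' & e' & _ & _ & Hinv).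
  exists (sim M' e' sg A), (sim M' e' sg B), (sim M' e' sg C), (sim M' e' sg D).
  rewrite !Hinv; auto.
Qed.

(* Normal form of a convex quadrilateral without parallel sides: up to a similarity
   taking F, E to (-1, 0), (1, 0), it lies in the upper half-plane, with sides ad, bc
   through (-1, 0) and sides ab, dc through (1, 0). *)
Lemma Lnet_frame A B C D s : turns_with s A B C D ->
  ~ parallel A B C D -> ~ parallel A D B C ->
  exists M e sg a b c d, sign_unit sg /\ e <> (0, 0) /\
    A = sim M e sg a /\ B = sim M e sg b /\ C = sim M e sg c /\ D = sim M e sg d /\
    0 < snd a /\ 0 < snd b /\ 0 < snd c /\ 0 < snd d /\
    cross Fp a d = 0 /\ cross Fp b c = 0 /\ cross Ep a b = 0 /\ cross Ep d c = 0.
Proof.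
  intros Ht HAB HAD.
  destruct (diagonal_points A B C D s Ht HAB HAD)
    as (E & F & sg & Hsg & HEAB & HEDC & HFAD & HFBC & SA & SB & SC & SD).
  set (M := ((fst E + fst F) / 2, (snd E + snd F) / 2)).
  set (e := ((fst E - fst F) / 2, (snd E - snd F) / 2)).
  assert (HF : sim M e sg Fp = F) by (unfold sim, M, e, Fp; apply injective_projections; simpl; field).
  assert (HE : sim M e sg Ep = E) by (unfold sim, M, e, Ep; apply injective_projections; simpl; field).
  assert (He : e <> (0, 0)).
  { intros X; assert (E = F) as <- by (unfold e in X; injection X as X1 X2;
      apply injective_projections; lra).
    rewrite cross_degenerate in SA; lra. }
  destruct (sim_frame_inverse M e sg A B C D Hsg He) as (a & b & c & d & -> & -> & -> & ->).
  (* the height of a point measures its signed distance to the line FE *)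
  assert (Hy : forall p, 0 < sg * cross F E (sim M e sg p) -> 0 < snd p).
  { intros p Hp; rewrite <- HF, <- HE, cross_sim in Hp; pose proof (norm2_pos e He).
    replace (sg * (sg * norm2 e * cross Fp Ep p)) with ((sg * sg) * (2 * norm2 e) * snd p) in Hp
      by (unfold cross, Fp, Ep; simpl; ring).
    rewrite (sign_unit_sq sg Hsg) in Hp; nra. }
  exists M, e, sg, a, b, c, d; do 6 (split; auto).
  do 4 (split; [apply Hy; auto |]).
  repeat split; eapply sim_collinear; eauto;
    [rewrite HF | rewrite HF | rewrite HE | rewrite HE]; eauto.
Qed.

Lemma wedge_sim_height M e sg p : wedge e (vec (sim M e sg p) M) = sg * norm2 e * snd p.
Proof. unfold wedge, vec, sim, norm2; simpl; ring. Qed.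

(* Normal form of a convex quadrilateral with AB parallel to CD only: up to a similarity
   taking F = AD n BC to the origin and AB to a horizontal direction, it lies in the
   upper half-plane with horizontal sides ab, dc and sides ad, bc through the origin. *)
Lemma Hnet_frame A B C D s : turns_with s A B C D ->
  parallel A B C D -> ~ parallel A D B C ->
  exists M e sg a b c d, sign_unit sg /\ e <> (0, 0) /\
    A = sim M e sg a /\ B = sim M e sg b /\ C = sim M e sg c /\ D = sim M e sg d /\
    0 < snd a /\ 0 < snd d /\ snd b = snd a /\ snd c = snd d /\
    cross F0 a d = 0 /\ cross F0 b c = 0.
Proof.
  intros (Hs & HoD & HoA & HoB & HoC) HAB HAD.
  unfold parallel in HAB, HAD; rewrite <- turns_parallel_AB_CD in HAB; rewrite <- turns_parallel_AD_BC in HAD.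
  set (oA := cross B C D) in *; set (oB := cross C D A) in *;
  set (oC := cross D A B) in *; set (oD := cross A B C) in *.
  assert (HDA : oD - oA <> 0) by lra.
  set (be := oD / (oD - oA)); set (F := lerp A D be); set (e := vec B A).
  set (kA := wedge e (vec A F)).
  assert (IA : kA = - (be * oC)) by (unfold kA, e, F, oC, cross, wedge, vec, lerp; simpl; ring).
  assert (IB : wedge e (vec B F) = kA) by (unfold kA, e, wedge, vec; simpl; ring).
  assert (ID : oD * wedge e (vec D F) = oA * kA).
  { unfold kA, e, F, be, oA, oC, oD in *; destruct A as [x1 y1], B as [x2 y2], C as [x3 y3], D as [x4 y4].
    unfold cross, wedge, vec, lerp in *; simpl in *; field; auto. }
  assert (IC : wedge e (vec C F) = wedge e (vec D F)).
  { assert (wedge e (vec C F) - wedge e (vec D F) = oA - oB)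
      by (unfold e, oA, oB, cross, wedge, vec; simpl; ring); lra. }
  assert (HoD' : oD <> 0) by (intros E0; rewrite E0 in HoD; lra).
  assert (HkA : kA <> 0).
  { rewrite IA; assert (oC <> 0) by (intros E0; rewrite E0 in HoC; lra).
    assert (be <> 0) by (unfold be, Rdiv; apply Rmult_integral_contrapositive; split;
      [auto | apply Rinv_neq_0_compat; auto]).
    intros X0; assert (X : be * oC = 0) by lra; apply Rmult_integral in X as [X | X]; auto. }
  set (sg := sgn kA).
  assert (Hsg : sign_unit sg) by (apply sgn_unit; auto).
  assert (HsgA : 0 < sg * kA) by (pose proof (sgn_pos_mul kA 1 HkA ltac:(lra)); unfold sg; lra).
  assert (He : e <> (0, 0)).
  { intros X; assert (A = B) as <- by (unfold e, vec in X; injection X as X1 X2;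
      apply injective_projections; lra).
    unfold oD in HoD; rewrite cross_degenerate in HoD; lra. }
  assert (HF : sim F e sg F0 = F) by (unfold sim, F0; apply injective_projections; simpl; ring).
  destruct (sim_frame_inverse F e sg A B C D Hsg He) as (a & b & c & d & Ea & Eb & Ec & Ed).
  (* heights of the preimages are signed distances to the line through F parallel to AB *)
  assert (Hy : forall p, sg * wedge e (vec (sim F e sg p) F) = norm2 e * snd p).
  { intros p; rewrite wedge_sim_height.
    replace (sg * (sg * norm2 e * snd p)) with ((sg * sg) * norm2 e * snd p) by ring.
    rewrite (sign_unit_sq sg Hsg); ring. }
  pose proof (norm2_pos e He) as Hn.
  assert (HsgD : 0 < sg * wedge e (vec D F)).
  { replace (wedge e (vec D F)) with (oA * oD / (oD * oD) * kA) by (field_simplify_eq; [lra | auto]).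
    replace (sg * (oA * oD / (oD * oD) * kA)) with (oA * oD / (oD * oD) * (sg * kA)) by ring.
    apply Rmult_lt_0_compat; auto; apply Rdiv_lt_0_compat; [destruct Hs; subst s; nra | nra]. }
  exists F, e, sg, a, b, c, d; do 6 (split; auto).
  pose proof (Hy a) as ya; pose proof (Hy b) as yb; pose proof (Hy c) as yc; pose proof (Hy d) as yd.
  rewrite <- Ea in ya; rewrite <- Eb in yb; rewrite <- Ec in yc; rewrite <- Ed in yd.
  fold kA in ya; rewrite IB in yb; rewrite IC in yc.
  split; [nra|]; split; [nra|].
  split; [apply (Rmult_eq_reg_l (norm2 e)); lra|].
  split; [apply (Rmult_eq_reg_l (norm2 e)); lra|].
  split; apply (sim_collinear F e sg); auto; rewrite HF.
  - rewrite <- Ea, <- Ed; unfold F, cross, lerp; simpl; ring.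
  - rewrite <- Eb, <- Ec; unfold F, be, oA, oD in *; destruct A as [x1 y1], B as [x2 y2], C as [x3 y3], D as [x4 y4].
    unfold cross, lerp in *; simpl in *; field; auto.
Qed.

Lemma cert_distinct A B C D : tangential_cert A B C D -> A <> B /\ A <> D.
Proof.
  intros (s & O & r & _ & _ & [H1 _] & _ & _ & [H4 _]).
  split; intros ->; rewrite cross_degenerate in *; lra.
Qed.

Lemma general_tangential_grid n A B C D : (1 <= n)%nat -> tangential_cert A B C D ->
  ~ parallel A B C D -> ~ parallel A D B C -> tangential_grid n A B C D.
Proof.
  intros Hn Hc HAB HAD.
  destruct (cert_turns _ _ _ _ Hc) as (s & Ht).
  destruct (cert_distinct _ _ _ _ Hc) as [Hne1 Hne2].
  destruct (Lnet_frame A B C D s Ht HAB HAD) as (M & e & sg & a & b & c & d & Hsg & He &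
    -> & -> & -> & -> & ya & yb & yc & yd & Had & Hbc & Hab & Hdc).
  apply tangential_cert_sim_inv in Hc; auto.
  destruct (Lnet_coords a b c d) as (t0 & tn & u0 & un & O00 & On0 & Onn & O0n & Ht0 & Hu0 &
    -> & -> & -> & ->); auto; try (intros E; subst; auto).
  apply tangential_grid_sim, Lnet_tangential_grid, Lnet_cell_ratio; auto.
Qed.

Lemma trapezoid_tangential_grid n A B C D : (1 <= n)%nat -> tangential_cert A B C D ->
  parallel A B C D -> ~ parallel A D B C -> tangential_grid n A B C D.
Proof.
  intros Hn Hc HAB HAD.
  destruct (cert_turns _ _ _ _ Hc) as (s & Ht).
  destruct (cert_distinct _ _ _ _ Hc) as [Hne1 Hne2].
  destruct (Hnet_frame A B C D s Ht HAB HAD) as (M & e & sg & a & b & c & d & Hsg & He &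
    -> & -> & -> & -> & ya & yd & yb & yc & Had & Hbc).
  apply tangential_cert_sim_inv in Hc; auto.
  destruct (Hnet_coords a b c d) as (t0 & tn & h0 & hn & Ht0 & Htn & Hh0 & Hhn & Htt & Hhh &
    -> & -> & -> & ->); auto; try (intros E; subst; auto).
  apply tangential_grid_sim, Hnet_tangential_grid, Hnet_cell_ratio; auto.
Qed.

Lemma parallelogram_vertex A B C D s : turns_with s A B C D ->
  parallel A B C D -> parallel A D B C -> C = (fst B + fst D - fst A, snd B + snd D - snd A).
Proof.
  intros (Hs & _ & _ & _ & HoC) HAB HAD.
  unfold parallel in HAB, HAD.
  set (u := vec B A) in *; set (v := vec D A).
  set (w := (fst C - (fst B + fst D - fst A), snd C - (snd B + snd D - snd A))).
  (* w = C - (B + D - A) is parallel to both u and v, which are independent *)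
  assert (l1 : wedge w u = 0) by (unfold w, u, v in *; unfold wedge, vec in *; simpl in *; nra).
  assert (l2 : wedge w v = 0) by (unfold w, u, v in *; unfold wedge, vec in *; simpl in *; nra).
  assert (Huv : wedge u v <> 0).
  { intros X; replace (cross D A B) with (wedge u v) in HoC
      by (unfold u, v, cross, wedge, vec; simpl; ring).
    rewrite X in HoC; lra. }
  assert (Ex : fst w * wedge u v = fst u * wedge w v - fst v * wedge w u) by (unfold wedge; ring).
  assert (Ey : snd w * wedge u v = snd u * wedge w v - snd v * wedge w u) by (unfold wedge; ring).
  rewrite l1, l2 in Ex, Ey.
  assert (fst w = 0) by (apply (Rmult_eq_reg_r (wedge u v)); auto; lra).
  assert (snd w = 0) by (apply (Rmult_eq_reg_r (wedge u v)); auto; lra).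
  unfold w in *; simpl in *; apply injective_projections; simpl; lra.
Qed.

(* A tangential parallelogram (a rhombus) is cut into n^2 translates of its copy scaled
   by 1 / n. *)
Lemma parallelogram_tangential_grid n A B C D : (1 <= n)%nat -> tangential_cert A B C D ->
  parallel A B C D -> parallel A D B C -> tangential_grid n A B C D.
Proof.
  intros Hn Hc HAB HAD.
  destruct (cert_turns _ _ _ _ Hc) as (s & Ht).
  pose proof (parallelogram_vertex A B C D s Ht HAB HAD) as HC.
  assert (Hn' : 0 < INR n) by (apply lt_0_INR; lia).
  set (Q := fun i j : nat => pl (pl A (INR i / INR n) (vec B A)) (INR j / INR n) (vec D A)).
  assert (Hincr : smono n (fun j => INR j / INR n)).
  { left; intros j _; apply Rmult_lt_compat_r; [apply Rinv_0_lt_compat; auto | apply lt_INR; lia]. }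
  assert (EA : Q 0%nat 0%nat = A) by (unfold Q, pl, vec; simpl; apply injective_projections; simpl; field; lra).
  assert (EB : Q n 0%nat = B) by (unfold Q, pl, vec; simpl; apply injective_projections; simpl; field; lra).
  assert (EC : Q n n = C) by (rewrite HC; unfold Q, pl, vec; apply injective_projections; simpl; field; lra).
  assert (ED : Q 0%nat n = D) by (unfold Q, pl, vec; simpl; apply injective_projections; simpl; field; lra).
  rewrite <- EA, <- EB, <- EC, <- ED.
  apply (tangential_grid_of_net n Q
    (fun i => pl A (INR i / INR n) (vec B A)) (fun _ => vec D A) (fun _ j => INR j / INR n)
    (fun j => pl A (INR j / INR n) (vec D A)) (fun _ => vec B A) (fun i _ => INR i / INR n)); auto.
  - intros i j _ _; unfold Q, pl; simpl; apply injective_projections; simpl; ring.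
  - intros i j Hi Hj.
    (* the cell is the image of ABCD under x |-> Q i j + (x - A) / n *)
    set (M := (fst (Q i j) - fst A / INR n, snd (Q i j) - snd A / INR n)).
    assert (Hsim : forall P, sim M (/ INR n, 0) 1 P =
      (fst (Q i j) + (fst P - fst A) / INR n, snd (Q i j) + (snd P - snd A) / INR n))
      by (intros P; unfold sim, M; apply injective_projections; simpl; field; lra).
    assert (He : (/ INR n, 0) <> (0, 0))
      by (intros X; injection X as X; apply Rinv_neq_0_compat in X; lra).
    pose proof (tangential_cert_sim M (/ INR n, 0) 1 _ _ _ _ ltac:(left; reflexivity) He Hc) as K.
    rewrite !Hsim in K.
    replace (Q i j) with (fst (Q i j) + (fst A - fst A) / INR n, snd (Q i j) + (snd A - snd A) / INR n)
      by (apply injective_projections; simpl; field; lra).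
    replace (Q (S i) j) with (fst (Q i j) + (fst B - fst A) / INR n, snd (Q i j) + (snd B - snd A) / INR n)
      by (unfold Q, pl, vec; rewrite S_INR; apply injective_projections; simpl; field; lra).
    replace (Q (S i) (S j)) with (fst (Q i j) + (fst C - fst A) / INR n, snd (Q i j) + (snd C - snd A) / INR n)
      by (rewrite HC; unfold Q, pl, vec; rewrite !S_INR; apply injective_projections; simpl; field; lra).
    replace (Q i (S j)) with (fst (Q i j) + (fst D - fst A) / INR n, snd (Q i j) + (snd D - snd A) / INR n)
      by (unfold Q, pl, vec; rewrite S_INR; apply injective_projections; simpl; field; lra).
    exact K.
Qed.

Lemma parallel_dec P Q R S : parallel P Q R S \/ ~ parallel P Q R S.
Proof. unfold parallel; destruct (Req_dec (wedge (vec Q P) (vec S R)) 0); auto. Qed.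

Lemma parallel_swap P Q R S : parallel P Q R S <-> parallel P Q S R.
Proof. unfold parallel, wedge, vec; simpl; split; intros; lra. Qed.

Theorem mainTheorem1 :
  forall (n : nat), (2 <= n)%nat ->
  forall A B C D : pt, tangential A B C D ->
  exists (a a' b b' : nat -> R) (X : nat -> nat -> pt),
    grid_dissection n n A B C D a a' b b' X /\
    (forall i j, (i < n)%nat -> (j < n)%nat ->
       tangential (X i j) (X (S i) j) (X (S i) (S j)) (X i (S j))).
Proof.
  intros n Hn A B C D HT.
  change (tangential_grid n A B C D).
  assert (Hn1 : (1 <= n)%nat) by lia.
  pose proof (tangential_tangential_cert _ _ _ _ HT) as Hc.
  destruct (parallel_dec A B C D) as [HAB | HAB], (parallel_dec A D B C) as [HAD | HAD].
  - apply parallelogram_tangential_grid; auto.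
  - apply trapezoid_tangential_grid; auto.
  - (* only AD || BC: exchange the roles of the two pairs of sides *)
    apply tangential_grid_transpose, trapezoid_tangential_grid;
      [auto | apply tangential_cert_rev; auto | apply parallel_swap; auto |].
    rewrite parallel_swap; auto.
  - apply general_tangential_grid; auto.
Qed.
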